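(* Let $(t_\varepsilon)_\varepsilon$ be the net defined below. For every compact $K\subseteq\mathbb{R}^2$ and every $\delta>0$ there exist $\eta>0$ and $\varepsilon_0\in(0,1]$ such that every principal minor of the Jacobian matrix $Dt_\varepsilon(U,X^1,X^2,V)$ lies in $(1-\delta,1+\delta)$ for all $(U,X^1,X^2,V)\in(-\infty,\eta]\times K\times\mathbb{R}$ and all $\varepsilon\le\varepsilon_0$. In particular, every principal minor of $Dt_\varepsilon$ is positive on $(-\infty,\eta]\times K\times\mathbb{R}$ for $\varepsilon\le\varepsilon_0$, and $\det\circ DT=[(\det Dt_\varepsilon)_\varepsilon]$ is strictly non-zero on $(-\infty,\eta]\times K\times\mathbb{R}$.
   Context: A net $(u_\varepsilon)_\varepsilon$ is strictly non-zero on a set $A$ if there exist $C>0$, $N\in\mathbb{N}$, $\varepsilon_0\in(0,1]$ with $\inf_{x\in A}|u_\varepsilon(x)|\ge C\varepsilon^N$ for all $\varepsilon\le\varepsilon_0$. Strict delta net: a net $(\delta_\varepsilon)_{\varepsilon\in(0,1]}$ of smooth compactly supported functions on $\mathbb{R}$ with $\operatorname{supp}\delta_\varepsilon\subseteq[-\varepsilon,\varepsilon]$, $\int\delta_\varepsilon\to1$ as $\varepsilon\to0$, and $\int|\delta_\varepsilon|\le C$ for some $C>0$ and small $\varepsilon$. The transformation: fix $f\in C^\infty(\mathbb{R}^2,\mathbb{R})$ and a strict delta net $(\delta_\varepsilon)_\varepsilon$; write $X=(X^1,X^2)$. Let $(x_\varepsilon)_\varepsilon=(x_\varepsilon^1,x_\varepsilon^2)_\varepsilon\in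 C^\infty(\mathbb{R}^2\times\mathbb{R},\mathbb{R}^2)^{(0,1]}$ be a fixed net such that for every compact $K\subseteq\mathbb{R}^2$ there is $\varepsilon_K$ such that for all $X\in K$ and $\varepsilon\le\varepsilon_K$, $U\mapsto x_\varepsilon(X,U)$ is the solution on all of $\mathbb{R}$ of $\partial_U^2x_\varepsilon^i(X,U)=\frac12\partial_if(x_\varepsilon(X,U))\,\delta_\varepsilon(U)$, $x_\varepsilon^i(X,-1)=X^i$, $\partial_Ux_\varepsilon^i(X,-1)=0$ ($i=1,2$) (such a net exists). Write $\dot x_\varepsilon^i=\partial_U x_\varepsilon^i$. Define $$v_\varepsilon(X,V,U)=V+\int_{-\varepsilon}^U f(x_\varepsilon(X,s))\delta_\varepsilon(s)\,ds+\int_{-\varepsilon}^U\int_{-\varepsilon}^s\sum_{i=1}^2\partial_if(x_\varepsilon(X,r))\,\dot x_\varepsilon^i(X,r)\,\delta_\varepsilon(r)\,dr\,ds,$$ and $t_\varepsilon:\mathbb{R}^4\to\mathbb{R}^4$, $t_\varepsilon(U,X^1,X^2,V)=(U,x_\varepsilon^1(X,U),x_\varepsilon^2(X,U),v_\varepsilon(X,V,U))$; $T:=[(t_\varepsilon)_\varepsilon]$, a Colombeau generalized function on $\mathbb{R}^4$ with values in $\mathbb{R}^4$. *)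

From Stdlib Require Import Reals List ClassicalEpsilon.
Import ListNotations.
Open Scope R_scope.

(** Points of R^d are encoded as functions [nat -> R]; only coordinates
    [0 .. d-1] are relevant. *)
Definition pt := nat -> R.

Definition upd (p : pt) (k : nat) (s : R) : pt :=
  fun i => if Nat.eqb i k then s else p i.

Definition has_partial (g : pt -> R) (k : nat) (p : pt) (l : R) : Prop :=
  derivable_pt_lim (fun s => g (upd p k s)) (p k) l.

Definition cont_at (d : nat) (g : pt -> R) (p : pt) : Prop :=
  forall e, 0 < e -> exists del, 0 < del /\
    forall q, (forall i, (i < d)%nat -> Rabs (q i - p i) < del) ->
              (forall i, (d <= i)%nat -> q i = p i) ->
              Rabs (g q - g p) < e.

Fixpoint Ck (k d : nat) (g : pt -> R) : Prop :=
  match k with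
  | O => forall p, cont_at d g p
  | S k' => (forall p, cont_at d g p) /\
            forall i, (i < d)%nat -> exists gi : pt -> R,
              (forall p, has_partial g i p (gi p)) /\ Ck k' d gi
  end.

Definition smooth (d : nat) (g : pt -> R) : Prop := forall k, Ck k d g.

(** Total version of the (oriented) Riemann integral: the value of
    [RiemannInt] when [g] is Riemann integrable on [a,b] (oriented). *)
Definition RInt (g : R -> R) (a b : R) : R :=
  epsilon (inhabits 0)
    (fun I => exists pr : Riemann_integrable g a b, RiemannInt pr = I).

(** Compact subsets of R^2 (closed and bounded, Heine-Borel). *)
Definition compact2 (K : R -> R -> Prop) : Prop :=
  (exists M, forall a b, K a b -> Rabs a <= M /\ Rabs b <= M) /\
  (forall a b, (forall e, 0 < e -> exists a' b', K a' b' /\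
                   Rabs (a - a') < e /\ Rabs (b - b') < e) -> K a b).

Definition strict_delta_net (delta : R -> R -> R) : Prop :=
  (forall eps, 0 < eps <= 1 -> smooth 1 (fun p => delta eps (p O))) /\
  (forall eps s, 0 < eps <= 1 -> delta eps s <> 0 -> - eps <= s <= eps) /\
  (forall e, 0 < e -> exists e0, 0 < e0 /\ forall eps, 0 < eps <= 1 -> eps < e0 ->
       Rabs (RInt (delta eps) (- eps) eps - 1) < e) /\
  (exists C e0, 0 < C /\ 0 < e0 /\ forall eps, 0 < eps <= 1 -> eps < e0 ->
       RInt (fun s => Rabs (delta eps s)) (- eps) eps <= C).

Fixpoint detl (M : nat -> nat -> R) (rows cols : list nat) : R :=
  match rows with
  | [] => 1
  | r :: rs =>
      fold_right Rplus 0
        (map (fun k => (-1) ^ k * M r (nth k cols O) *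
                       detl M rs (firstn k cols ++ skipn (S k) cols))
             (seq 0 (length cols)))
  end.

Definition principal_index (S : list nat) : Prop :=
  S <> [] /\ NoDup S /\ Forall (fun i => (i < 4)%nat) S.

Definition principal_minor (M : nat -> nat -> R) (S : list nat) : R :=
  detl M S S.

Definition is_jacobian4 (F : nat -> pt -> R) (p : pt) (J : nat -> nat -> R)
  : Prop :=
  forall i j, (i < 4)%nat -> (j < 4)%nat -> has_partial (F i) j p (J i j).

(** The function v_eps(X,V,U). [x1 eps X1 X2 U], [x1d] = d/dU x1, etc.;
    [f1], [f2] are the partial derivatives of [f]. *)
Definition v_eps (f f1 f2 : R -> R -> R) (delta : R -> R -> R)
  (x1 x2 x1d x2d : R -> R -> R -> R -> R) (eps X1 X2 V U : R) : R :=
  V + RInt (fun s => f (x1 eps X1 X2 s) (x2 eps X1 X2 s) * delta eps s) (- eps) U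
    + RInt (fun s => RInt (fun r =>
              (f1 (x1 eps X1 X2 r) (x2 eps X1 X2 r) * x1d eps X1 X2 r
             + f2 (x1 eps X1 X2 r) (x2 eps X1 X2 r) * x2d eps X1 X2 r)
             * delta eps r) (- eps) s) (- eps) U.

(** Components of t_eps(U,X1,X2,V); coordinates: 0 = U, 1 = X1, 2 = X2, 3 = V. *)
Definition t_eps (f f1 f2 : R -> R -> R) (delta : R -> R -> R)
  (x1 x2 x1d x2d : R -> R -> R -> R -> R) (eps : R) (i : nat) (p : pt) : R :=
  match i with
  | O => p O
  | 1%nat => x1 eps (p 1%nat) (p 2%nat) (p O)
  | 2%nat => x2 eps (p 1%nat) (p 2%nat) (p O)
  | _ => v_eps f f1 f2 delta x1 x2 x1d x2d eps (p 1%nat) (p 2%nat) (p 3%nat) (p O)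
  end.

Definition mkpt4 (U X1 X2 V : R) : pt :=
  fun i => match i with O => U | 1%nat => X1 | 2%nat => X2 | 3%nat => V | _ => 0 end.

From Stdlib Require Import Reals Lra Lia List Psatz ClassicalEpsilon Classical FunctionalExtensionality.
Import ListNotations.
Open Scope R_scope.

(** [t_eps] keeps [U], [x_eps] does not depend on [V], and [v_eps] is [V]
    plus a term independent of [V]. Hence row [U] of [Dt_eps] is [(1,0,0,0)],
    column [V] is [(0,0,0,1)], and every principal minor is [1], a diagonal
    entry, or the determinant of the block [D_X x_eps].  That block is close
    to the identity for [U <= eta]: a Gronwall-type continuous induction,
    driven by the uniform bound on the [L^1] norm of [delta_eps], shows that
    [x_eps(X', U) - x_eps(X, U)] equals [X' - X] up to a relative error
    [rho] once [eps] and [eta] are small.  The [v]-row only has to exist: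
    along a solution the inner integral in [v_eps] is the kinetic energy
    [|dx_eps/dU|^2], so differentiation under the integral sign applies. *)

(** * Real analysis *)

Lemma Rabs_le_inv a b : Rabs a <= b -> - b <= a <= b.
Proof. unfold Rabs; destruct Rcase_abs; lra. Qed.

Lemma Rabs_le_of_sub_le u v w : Rabs (u - v) <= w -> Rabs u <= Rabs v + w.
Proof.
  intros H. replace u with ((u - v) + v) by ring.
  eapply Rle_trans; [apply Rabs_triang|lra].
Qed.

Lemma continuity_pt_near g s0 e : continuity_pt g s0 -> 0 < e ->
  exists r, 0 < r /\ forall u, Rabs (u - s0) < r -> Rabs (g u - g s0) < e.
Proof.
  intros H he. destruct (H e he) as [r [hr Hr]]. exists r; split; auto.
  intros u hu. destruct (Req_dec u s0) as [->|hne].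
  - rewrite Rminus_diag, Rabs_R0; auto.
  - apply (Hr u). split; [split; [exact I|auto]|]. simpl; unfold Rdist; auto.
Qed.

(** The supremum of the [x] with [L a x] can be neither short of [b] nor
    beyond it. *)
Lemma interval_induction (a b : R) (L : R -> R -> Prop) :
  a <= b ->
  (forall c d e, a <= c -> c <= d -> d <= e -> e <= b -> L c d -> L d e -> L c e) ->
  (forall s, a <= s <= b -> exists r, 0 < r /\ forall c d, a <= c -> c <= d -> d <= b ->
       s - r < c -> d < s + r -> L c d) ->
  L a b.
Proof.
  intros hab hg hl.
  set (S := fun x => a <= x <= b /\ L a x).
  assert (HSa : S a).
  { split; [lra|]. destruct (hl a ltac:(lra)) as [r [hr H]]. apply H; lra. }
  assert (Hb : bound S) by (exists b; intros x [[? ?] _]; lra).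
  destruct (completeness S Hb (ex_intro _ a HSa)) as [m [Hub Hlub]].
  assert (ham : a <= m) by (apply Hub; exact HSa).
  assert (hmb : m <= b) by (apply Hlub; intros x [[? ?] _]; lra).
  destruct (hl m ltac:(lra)) as [r [hr H]].
  assert (Hc : exists c, S c /\ m - r < c).
  { apply NNPP; intro Hn.
    assert (m <= m - r); [|lra].
    apply Hlub. intros x Hx. destruct (Rle_dec x (m - r)) as [?|Hx']; [auto|].
    exfalso; apply Hn; exists x; split; auto; lra. }
  destruct Hc as [c [[[hac hcb] hLc] hcm]].
  assert (hcm' : c <= m) by (apply Hub; split; [lra|auto]).
  set (d := Rmin b (m + r / 2)).
  assert (hd1 : d <= b) by apply Rmin_l.
  assert (hd2 : d <= m + r/2) by apply Rmin_r.
  assert (hd3 : m <= d) by (unfold d; apply Rmin_glb; lra).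
  assert (hLd : L a d) by (apply (hg a c d); try lra; auto; apply H; lra).
  destruct (Rle_dec b (m + r/2)) as [h1|h1].
  - unfold d in hLd. rewrite Rmin_left in hLd by lra. exact hLd.
  - unfold d in hd3, hLd |- *. rewrite Rmin_right in hLd by lra.
    assert (m + r/2 <= m); [|lra]. apply Hub. split; [lra|auto].
Qed.

Lemma continuous_bootstrap (g : R -> R) a b C C' : a <= b -> C' < C -> g a <= C ->
  (forall u, a <= u <= b -> continuity_pt g u) ->
  (forall t, a <= t <= b -> (forall u, a <= u <= t -> g u <= C) -> g t <= C') ->
  forall u, a <= u <= b -> g u <= C'.
Proof.
  intros hab hC hga hc key.
  set (L := fun c d => (forall u, a <= u <= c -> g u <= C) -> forall u, a <= u <= d -> g u <= C).
  assert (HL : L a b).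
  { apply interval_induction; auto.
    - intros c d e _ _ _ _ H1 H2 H. auto.
    - intros s0 hs0.
      destruct (continuity_pt_near g s0 ((C - C')/2) (hc s0 hs0) ltac:(lra)) as [r [hr Hr]].
      exists r; split; auto. intros c d hac hcd hdb hc' hd' H u hu.
      destruct (Rle_dec u c); [apply H; lra|].
      assert (g c <= C') by (apply key; auto; lra).
      assert (A1 : Rabs (g u - g s0) < (C - C')/2) by (apply Hr; apply Rabs_def1; lra).
      assert (A2 : Rabs (g c - g s0) < (C - C')/2) by (apply Hr; apply Rabs_def1; lra).
      apply Rabs_def2 in A1. apply Rabs_def2 in A2. lra. }
  intros u hu. apply key; auto. intros w hw. apply HL; [|lra].
  intros w' hw'. replace w' with a by lra. auto.
Qed.

Lemma continuity_pt_derivable_pt_lim F x l : derivable_pt_lim F x l -> continuity_pt F x.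
Proof. intros H. apply (derivable_continuous_pt F x (exist _ l H)). Qed.

Lemma continuity_pt_Rabs_sub (F : R -> R) c u :
  continuity_pt F u -> continuity_pt (fun u => Rabs (F u - c)) u.
Proof.
  intros h. apply (continuity_pt_comp (fun u => F u - c) Rabs).
  - apply continuity_pt_minus; auto. apply continuity_pt_const; intros ? ?; auto.
  - apply Rcontinuity_abs.
Qed.

Lemma derivable_pt_lim_linear k c : derivable_pt_lim (fun t => k * t) c k.
Proof.
  intros e he. exists (mkposreal 1 Rlt_0_1). intros h hh _.
  replace ((k * (c + h) - k * c) / h - k) with 0 by (field; auto).
  rewrite Rabs_R0; auto.
Qed.

Lemma derivable_pt_lim_at_shift (F : R -> R) X t l :
  derivable_pt_lim F (X + t) l -> derivable_pt_lim (fun t => F (X + t)) t l.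
Proof.
  intros H. replace l with (l * 1) by ring.
  apply (derivable_pt_lim_comp (fun t => X + t) F); auto.
  replace 1 with (0 + 1) by ring. apply derivable_pt_lim_plus.
  - apply derivable_pt_lim_const.
  - apply derivable_pt_lim_id.
Qed.

Lemma derivable_pt_lim_of_shift F x0 l :
  derivable_pt_lim (fun t => F (x0 + t)) 0 l -> derivable_pt_lim F x0 l.
Proof.
  intros H e he. destruct (H e he) as [d Hd]. exists d. intros h h0 hh.
  specialize (Hd h h0 hh). rewrite !Rplus_0_l, Rplus_0_r in Hd. auto.
Qed.

Lemma le_of_derive_nonneg F F' a b : a <= b ->
  (forall c, a <= c <= b -> derivable_pt_lim F c (F' c)) ->
  (forall c, a <= c <= b -> 0 <= F' c) -> F a <= F b.
Proof.
  intros hab hd hp. destruct (Req_dec a b) as [->|hne]; [lra|].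
  destruct (MVT_cor2 F F' a b ltac:(lra) hd) as [c [Hc Hc']].
  assert (0 <= F' c * (b - a)) by (apply Rmult_le_pos; [apply hp; lra|lra]). lra.
Qed.

Lemma MVT_between F F' a b :
  (forall c, Rmin a b <= c <= Rmax a b -> derivable_pt_lim F c (F' c)) ->
  exists c, Rmin a b <= c <= Rmax a b /\ F b - F a = F' c * (b - a).
Proof.
  intros H. destruct (Rtotal_order a b) as [h|[h|h]].
  - destruct (MVT_cor2 F F' a b h) as [c [Hc Hc']].
    { intros c hc; apply H; rewrite Rmin_left, Rmax_right; lra. }
    exists c; split; auto; rewrite Rmin_left, Rmax_right; lra.
  - subst. exists b; split; [rewrite Rmin_left, Rmax_left; lra|ring].
  - destruct (MVT_cor2 F F' b a h) as [c [Hc Hc']].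
    { intros c hc; apply H; rewrite Rmin_right, Rmax_left; lra. }
    exists c; split; [rewrite Rmin_right, Rmax_left; lra|]. lra.
Qed.

Lemma eq_of_derive_0 F a b :
  (forall c, Rmin a b <= c <= Rmax a b -> derivable_pt_lim F c 0) -> F a = F b.
Proof. intros H. destruct (MVT_between F (fun _ => 0) a b H) as [c [_ Hc]]. lra. Qed.

Lemma Rabs_incr_le_of_derive g g' p p' a b : a <= b ->
  (forall u, a <= u <= b -> derivable_pt_lim g u (g' u)) ->
  (forall u, a <= u <= b -> derivable_pt_lim p u (p' u)) ->
  (forall u, a <= u <= b -> Rabs (g' u) <= p' u) ->
  Rabs (g b - g a) <= p b - p a.
Proof.
  intros hab hg hp hb.
  assert (A1 : p a - g a <= p b - g b).
  { apply (le_of_derive_nonneg (fun u => p u - g u) (fun u => p' u - g' u)); auto.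
    - intros; apply derivable_pt_lim_minus; auto.
    - intros c hc. specialize (hb c hc). apply Rabs_le_inv in hb. lra. }
  assert (A2 : p a + g a <= p b + g b).
  { apply (le_of_derive_nonneg (fun u => p u + g u) (fun u => p' u + g' u)); auto.
    - intros; apply derivable_pt_lim_plus; auto.
    - intros c hc. specialize (hb c hc). apply Rabs_le_inv in hb. lra. }
  apply Rabs_le; lra.
Qed.

Lemma Rabs_derive_sub_le F x0 l c r rho : derivable_pt_lim F x0 l -> 0 < r ->
  (forall h, h <> 0 -> Rabs h < r -> Rabs ((F (x0 + h) - F x0) / h - c) <= rho) ->
  Rabs (l - c) <= rho.
Proof.
  intros H hr hb. apply Rnot_lt_le. intro hlt.
  destruct (H (Rabs (l - c) - rho) ltac:(lra)) as [d Hd].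
  assert (hd : 0 < d) by apply cond_pos.
  set (h := Rmin (d/2) (r/2)).
  assert (hh : 0 < h) by (apply Rmin_pos; lra).
  assert (h1 : Rabs h < d) by (rewrite Rabs_pos_eq by lra; generalize (Rmin_l (d/2) (r/2)); unfold h; lra).
  assert (h2 : Rabs h < r) by (rewrite Rabs_pos_eq by lra; generalize (Rmin_r (d/2) (r/2)); unfold h; lra).
  specialize (Hd h ltac:(lra) h1). specialize (hb h ltac:(lra) h2).
  set (q := (F (x0 + h) - F x0) / h) in *.
  assert (Rabs (l - c) <= Rabs (q - l) + Rabs (q - c)).
  { replace (l - c) with (-(q - l) + (q - c)) by ring.
    eapply Rle_trans; [apply Rabs_triang|]. rewrite Rabs_Ropp. lra. }
  lra.
Qed.

Lemma Rabs_incr_le_of_derive_bound g g' W a b : a <= b ->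
  (forall u, a <= u <= b -> derivable_pt_lim g u (g' u)) ->
  (forall u, a <= u <= b -> Rabs (g' u) <= W) ->
  Rabs (g b - g a) <= W * (b - a).
Proof.
  intros hab hg hb.
  replace (W * (b - a)) with (W * b - W * a) by ring.
  apply (Rabs_incr_le_of_derive g g' (fun u => W * u) (fun _ => W)); auto.
  intros; apply derivable_pt_lim_linear.
Qed.

Lemma Rabs_derive_pair_sub_le (F G : R -> R) x0 lF lG cF cG r rho :
  derivable_pt_lim F x0 lF -> derivable_pt_lim G x0 lG -> 0 < r ->
  (forall h, h <> 0 -> Rabs h < r ->
     Rabs (F (x0 + h) - F x0 - cF * h) + Rabs (G (x0 + h) - G x0 - cG * h) <= rho * Rabs h) ->
  Rabs (lF - cF) <= rho /\ Rabs (lG - cG) <= rho.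
Proof.
  intros hF hG hr hb.
  assert (quotient : forall n c h, h <> 0 -> Rabs (n - c * h) <= rho * Rabs h ->
            Rabs (n / h - c) <= rho).
  { intros n c h h0 H. replace (n / h - c) with ((n - c * h) / h) by (field; auto).
    unfold Rdiv. rewrite Rabs_mult, Rabs_inv.
    apply (Rmult_le_reg_r (Rabs h)); [apply Rabs_pos_lt; auto|].
    rewrite Rmult_assoc, Rinv_l, Rmult_1_r by (apply Rabs_no_R0; auto). lra. }
  split; [apply (Rabs_derive_sub_le F x0 lF cF r rho hF hr)
         |apply (Rabs_derive_sub_le G x0 lG cG r rho hG hr)];
    intros h h0 hh; apply quotient; auto; specialize (hb h h0 hh);
    generalize (Rabs_pos (F (x0 + h) - F x0 - cF * h)) (Rabs_pos (G (x0 + h) - G x0 - cG * h)); lra.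
Qed.

Lemma small_time_scale W C rho : 0 <= W -> 0 <= C -> 0 < rho <= 1 ->
  exists T, 0 < T /\ T * W <= 1 / 4 /\ 4 * (T * C) <= rho.
Proof.
  intros hW hC hrho. set (D := 4 * (W + C) + 1).
  assert (hD : 0 < D) by (unfold D; lra).
  exists (rho / D).
  assert (hT : 0 < rho / D) by (apply Rdiv_lt_0_compat; lra).
  assert (hTD : rho / D * D = rho) by (field; lra).
  assert (rho / D * (4 * W) <= rho / D * D) by (apply Rmult_le_compat_l; [lra|unfold D; lra]).
  assert (rho / D * (4 * C) <= rho / D * D) by (apply Rmult_le_compat_l; [lra|unfold D; lra]).
  repeat split; lra.
Qed.

Lemma compact2_bounded K : compact2 K ->
  exists M, 0 <= M /\ forall a b, K a b -> Rabs a <= M /\ Rabs b <= M.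
Proof.
  intros [[M0 HM] _]. exists (Rabs M0). split; [apply Rabs_pos|].
  intros a b h. destruct (HM a b h). generalize (Rle_abs M0). lra.
Qed.

Lemma compact2_square M : compact2 (fun a b => Rabs a <= M /\ Rabs b <= M).
Proof.
  split; [exists M; auto|].
  intros a b H. split; apply Rnot_lt_le; intro hlt.
  - destruct (H (Rabs a - M) ltac:(lra)) as [a' [b' [[h1 _] [h2 _]]]].
    generalize (Rabs_le_of_sub_le a a' _ (Rle_refl _)). lra.
  - destruct (H (Rabs b - M) ltac:(lra)) as [a' [b' [[_ h1] [_ h2]]]].
    generalize (Rabs_le_of_sub_le b b' _ (Rle_refl _)). lra.
Qed.

(** * The total Riemann integral [RInt] *)

Lemma Riemann_integrable_continuity f a b : continuity f -> Riemann_integrable f a b.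
Proof.
  intros hf. destruct (Rle_dec a b).
  - apply continuity_implies_RiemannInt; auto.
  - apply RiemannInt_P1, continuity_implies_RiemannInt; [lra|auto].
Qed.

Lemma RInt_RiemannInt f a b (pr : Riemann_integrable f a b) : RInt f a b = RiemannInt pr.
Proof.
  unfold RInt.
  destruct (epsilon_spec (inhabits 0)
     (fun I => exists pr : Riemann_integrable f a b, RiemannInt pr = I)
     (ex_intro _ _ (ex_intro _ pr eq_refl))) as [pr' Hp].
  rewrite <- Hp. apply RiemannInt_P5.
Qed.

Lemma RInt_Chasles f a b c : continuity f -> RInt f a b + RInt f b c = RInt f a c.
Proof.
  intros hf.
  rewrite (RInt_RiemannInt _ _ _ (Riemann_integrable_continuity f a b hf)),
    (RInt_RiemannInt _ _ _ (Riemann_integrable_continuity f b c hf)),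
    (RInt_RiemannInt _ _ _ (Riemann_integrable_continuity f a c hf)).
  apply RiemannInt_P26.
Qed.

Lemma RInt_refl f a : continuity f -> RInt f a a = 0.
Proof.
  intros hf. rewrite (RInt_RiemannInt _ _ _ (Riemann_integrable_continuity f a a hf)).
  apply RiemannInt_P9.
Qed.

Lemma RInt_ext f g a b : (forall x, f x = g x) -> RInt f a b = RInt g a b.
Proof. intros H. now rewrite (functional_extensionality f g H). Qed.

Lemma derivable_pt_lim_RInt f a u :
  continuity f -> derivable_pt_lim (fun x => RInt f a x) u (f u).
Proof.
  intros hf.
  set (lo := Rmin a u - 1). set (hi := Rmax a u + 1).
  assert (h1 : lo <= a) by (unfold lo; generalize (Rmin_l a u); lra).
  assert (h2 : lo < u) by (unfold lo; generalize (Rmin_r a u); lra).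
  assert (h3 : a <= hi) by (unfold hi; generalize (Rmax_l a u); lra).
  assert (h4 : u < hi) by (unfold hi; generalize (Rmax_r a u); lra).
  assert (h : lo <= hi) by lra.
  set (P := primitive h (FTC_P1 h (fun x _ => hf x))).
  assert (HP : forall x, lo <= x <= hi -> P x = RInt f lo x).
  { intros x hx. unfold P, primitive.
    destruct (Rle_dec lo x); [|lra]. destruct (Rle_dec x hi); [|lra].
    symmetry. apply RInt_RiemannInt. }
  apply (derivable_pt_lim_locally_ext (fun x => P x - P a) _ u lo hi); [lra| |].
  - intros z hz. rewrite !HP by lra. rewrite <- (RInt_Chasles f lo a z hf). ring.
  - replace (f u) with (f u - 0) by ring.
    apply derivable_pt_lim_minus; [apply RiemannInt_P28; lra|apply derivable_pt_lim_const].
Qed.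

Lemma RInt_derive F F' a b : continuity F' -> (forall x, derivable_pt_lim F x (F' x)) ->
  RInt F' a b = F b - F a.
Proof.
  intros hc hd.
  assert (E := eq_of_derive_0 (fun x => RInt F' a x - F x) a b).
  cbv beta in E; rewrite RInt_refl in E by auto.
  assert (RInt F' a b - F b = 0 - F a); [|lra].
  symmetry; apply E. intros c _.
  replace 0 with (F' c - F' c) by ring.
  apply derivable_pt_lim_minus; [apply derivable_pt_lim_RInt|]; auto.
Qed.

Lemma RInt_plus_scal f g k a b : continuity f -> continuity g ->
  RInt (fun x => f x + k * g x) a b = RInt f a b + k * RInt g a b.
Proof.
  intros hf hg.
  assert (hc : continuity (fun x => f x + k * g x)).
  { apply continuity_plus; auto. apply continuity_scal; auto. }
  rewrite (RInt_derive (fun x => RInt f a x + k * RInt g a x) _ a b hc).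
  - rewrite !RInt_refl by auto. ring.
  - intros x. apply derivable_pt_lim_plus; [apply derivable_pt_lim_RInt; auto|].
    apply derivable_pt_lim_scal, derivable_pt_lim_RInt; auto.
Qed.

Lemma RInt_scal k f a b : continuity f -> RInt (fun x => k * f x) a b = k * RInt f a b.
Proof.
  intros hf. assert (h0 : continuity (fun _ : R => 0)) by (apply continuity_const; intros ? ?; auto).
  rewrite <- (RInt_ext (fun x => 0 + k * f x)) by (intros; ring).
  rewrite RInt_plus_scal by auto.
  rewrite (RInt_derive (fun _ => 0) (fun _ => 0)); [ring|auto|].
  intros; apply derivable_pt_lim_const.
Qed.

Lemma RInt_minus f g a b : continuity f -> continuity g ->
  RInt (fun x => f x - g x) a b = RInt f a b - RInt g a b.
Proof.
  intros hf hg. rewrite <- (RInt_ext (fun x => f x + (-1) * g x)) by (intros; ring).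
  rewrite RInt_plus_scal by auto. ring.
Qed.

Lemma Rabs_RInt_le f a b M : continuity f ->
  (forall x, Rmin a b <= x <= Rmax a b -> Rabs (f x) <= M) ->
  Rabs (RInt f a b) <= M * Rabs (b - a).
Proof.
  intros hf hb.
  destruct (MVT_abs (fun x => RInt f a x) f a b) as [c [Hc Hc']].
  { intros; apply derivable_pt_lim_RInt; auto. }
  rewrite RInt_refl, Rminus_0_r in Hc by auto. rewrite Hc.
  apply Rmult_le_compat_r; [apply Rabs_pos|auto].
Qed.

(** * Functions of two variables *)

Definition continuous2_at (F : R -> R -> R) a b := forall e, 0 < e -> exists d, 0 < d /\
  forall a' b', Rabs (a' - a) < d -> Rabs (b' - b) < d -> Rabs (F a' b' - F a b) < e.

Definition continuous3_at (F : R -> R -> R -> R) a b c := forall e, 0 < e -> exists d, 0 < d /\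
  forall a' b' c', Rabs (a' - a) < d -> Rabs (b' - b) < d -> Rabs (c' - c) < d ->
    Rabs (F a' b' c' - F a b c) < e.

Lemma continuous2_at_fst a b : continuous2_at (fun x _ => x) a b.
Proof. intros e he. exists e; split; auto. Qed.

Lemma continuous2_at_snd a b : continuous2_at (fun _ y => y) a b.
Proof. intros e he. exists e; split; auto. Qed.

Lemma continuous2_at_plus F G a b : continuous2_at F a b -> continuous2_at G a b ->
  continuous2_at (fun a b => F a b + G a b) a b.
Proof.
  intros hF hG e he. destruct (hF (e/2) ltac:(lra)) as [d1 [h1 H1]].
  destruct (hG (e/2) ltac:(lra)) as [d2 [h2 H2]].
  exists (Rmin d1 d2); split; [apply Rmin_pos; auto|]. intros a' b' ha hb.
  generalize (Rmin_l d1 d2) (Rmin_r d1 d2); intros m1 m2.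
  specialize (H1 a' b' ltac:(lra) ltac:(lra)). specialize (H2 a' b' ltac:(lra) ltac:(lra)).
  replace (F a' b' + G a' b' - (F a b + G a b)) with ((F a' b' - F a b) + (G a' b' - G a b)) by ring.
  eapply Rle_lt_trans; [apply Rabs_triang|lra].
Qed.

Lemma continuous2_at_mult F G a b : continuous2_at F a b -> continuous2_at G a b ->
  continuous2_at (fun a b => F a b * G a b) a b.
Proof.
  intros hF hG e he.
  set (M := Rabs (F a b) + Rabs (G a b) + 1).
  assert (hM : 0 < M) by (unfold M; generalize (Rabs_pos (F a b)) (Rabs_pos (G a b)); lra).
  set (e' := Rmin 1 (e / (2 * M + 1))).
  assert (he' : 0 < e') by (apply Rmin_pos; [lra|apply Rdiv_lt_0_compat; lra]).
  assert (e'1 : e' <= 1) by apply Rmin_l.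
  assert (e'3 : e' * (2 * M + 1) <= e).
  { assert (e' <= e / (2 * M + 1)) by apply Rmin_r.
    apply (Rmult_le_compat_r (2*M+1)) in H; [|lra].
    unfold Rdiv in H. rewrite Rmult_assoc, Rinv_l in H by lra. lra. }
  destruct (hF e' he') as [d1 [h1 H1]]. destruct (hG e' he') as [d2 [h2 H2]].
  exists (Rmin d1 d2); split; [apply Rmin_pos; auto|]. intros a' b' ha hb.
  generalize (Rmin_l d1 d2) (Rmin_r d1 d2); intros m1 m2.
  specialize (H1 a' b' ltac:(lra) ltac:(lra)). specialize (H2 a' b' ltac:(lra) ltac:(lra)).
  replace (F a' b' * G a' b' - F a b * G a b) with
    ((F a' b' - F a b) * (G a' b' - G a b) + (F a' b' - F a b) * G a b + F a b * (G a' b' - G a b)) by ring.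
  eapply Rle_lt_trans; [apply Rabs_triang|].
  eapply Rle_lt_trans; [apply Rplus_le_compat_r, Rabs_triang|].
  rewrite !Rabs_mult.
  assert (Rabs (F a' b' - F a b) * Rabs (G a' b' - G a b) <= e' * e').
  { apply Rmult_le_compat; try apply Rabs_pos; lra. }
  assert (Rabs (F a' b' - F a b) * Rabs (G a b) <= e' * Rabs (G a b)).
  { apply Rmult_le_compat_r; [apply Rabs_pos|lra]. }
  assert (Rabs (F a b) * Rabs (G a' b' - G a b) <= Rabs (F a b) * e').
  { apply Rmult_le_compat_l; [apply Rabs_pos|lra]. }
  assert (e' * e' <= e' * 1) by (apply Rmult_le_compat_l; lra).
  assert (e' * (Rabs (G a b) + Rabs (F a b) + 1) < e' * (2 * M + 1)).
  { apply Rmult_lt_compat_l; auto. unfold M; generalize (Rabs_pos (F a b)) (Rabs_pos (G a b)); lra. }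
  nra.
Qed.

Lemma continuous2_at_comp (g : R -> R -> R) (P Q : R -> R -> R) a b :
  continuous2_at g (P a b) (Q a b) -> continuous2_at P a b -> continuous2_at Q a b ->
  continuous2_at (fun a b => g (P a b) (Q a b)) a b.
Proof.
  intros hg hP hQ e he. destruct (hg e he) as [d [hd Hd]].
  destruct (hP d hd) as [d1 [h1 H1]]. destruct (hQ d hd) as [d2 [h2 H2]].
  exists (Rmin d1 d2); split; [apply Rmin_pos; auto|]. intros a' b' ha hb.
  generalize (Rmin_l d1 d2) (Rmin_r d1 d2); intros m1 m2.
  apply Hd; [apply H1|apply H2]; lra.
Qed.

Lemma continuous2_at_of_snd (h : R -> R) a b :
  continuity_pt h b -> continuous2_at (fun _ b => h b) a b.
Proof.
  intros H e he. destruct (continuity_pt_near h b e H he) as [d [hd Hd]].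
  exists d; split; auto.
Qed.

Lemma continuity_pt_of_continuous2_at F a b : continuous2_at F a b -> continuity_pt (F a) b.
Proof.
  intros H e he. destruct (H e he) as [d [hd Hd]]. exists d; split; auto.
  intros x [_ hx]. simpl in *. unfold Rdist in *. apply Hd; auto.
  rewrite Rminus_diag, Rabs_R0; auto.
Qed.

Lemma continuity_pt_comp2 F (P Q : R -> R) t :
  continuous2_at F (P t) (Q t) -> continuity_pt P t -> continuity_pt Q t ->
  continuity_pt (fun t => F (P t) (Q t)) t.
Proof.
  intros H cP cQ e he. destruct (H e he) as [d [hd Hd]].
  destruct (continuity_pt_near P t d cP hd) as [r1 [h1 H1]].
  destruct (continuity_pt_near Q t d cQ hd) as [r2 [h2 H2]].
  exists (Rmin r1 r2); split; [apply Rmin_pos; auto|].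
  intros x [_ hx]. simpl in *. unfold Rdist in *.
  generalize (Rmin_l r1 r2) (Rmin_r r1 r2); intros m1 m2.
  apply Hd; [apply H1|apply H2]; lra.
Qed.

Lemma continuous2_at_of_continuous3_at_fst (F : R -> R -> R -> R) a b c t0 :
  continuous3_at F (a + t0) b c -> continuous2_at (fun t s => F (a + t) b s) t0 c.
Proof.
  intros H e he. destruct (H e he) as [d [hd Hd]]. exists d; split; auto.
  intros t s ht hs. apply Hd; auto.
  - replace (a + t - (a + t0)) with (t - t0) by ring; auto.
  - rewrite Rminus_diag, Rabs_R0; auto.
Qed.

Lemma continuous2_at_of_continuous3_at_snd (F : R -> R -> R -> R) a b c t0 :
  continuous3_at F a (b + t0) c -> continuous2_at (fun t s => F a (b + t) s) t0 c.
Proof.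
  intros H e he. destruct (H e he) as [d [hd Hd]]. exists d; split; auto.
  intros t s ht hs. apply Hd; auto.
  - rewrite Rminus_diag, Rabs_R0; auto.
  - replace (b + t - (b + t0)) with (t - t0) by ring; auto.
Qed.

Lemma continuity_pt_of_continuous3_at (F : R -> R -> R -> R) a b c :
  continuous3_at F a b c -> continuity_pt (F a b) c.
Proof.
  intros H e he. destruct (H e he) as [d [hd Hd]]. exists d; split; auto.
  intros x [_ hx]. simpl in *. unfold Rdist in *. apply Hd; auto; rewrite Rminus_diag, Rabs_R0; auto.
Qed.

Lemma continuous2_bounded_near_column (F : R -> R -> R) Rr a0 :
  (forall a b, continuous2_at F a b) -> - Rr <= Rr ->
  exists r B, 0 < r /\ forall a b, Rabs (a - a0) < r -> - Rr <= b <= Rr -> Rabs (F a b) <= B.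
Proof.
  intros hF hR.
  set (L := fun c d => exists r B, 0 < r /\
    forall a b, Rabs (a - a0) < r -> c <= b <= d -> Rabs (F a b) <= B).
  change (L (- Rr) Rr). apply interval_induction; auto.
  - intros c d e _ _ _ _ [r1 [B1 [h1 H1]]] [r2 [B2 [h2 H2]]].
    exists (Rmin r1 r2), (Rmax B1 B2); split; [apply Rmin_pos; auto|].
    intros a b ha hb. generalize (Rmin_l r1 r2) (Rmin_r r1 r2); intros m1 m2.
    destruct (Rle_dec b d).
    + eapply Rle_trans; [apply H1|apply Rmax_l]; lra.
    + eapply Rle_trans; [apply H2|apply Rmax_r]; lra.
  - intros s hs. destruct (hF a0 s 1 ltac:(lra)) as [d [hd Hd]].
    exists d; split; auto. intros c e' _ _ _ hc he.
    exists d, (Rabs (F a0 s) + 1); split; auto. intros a b ha hb.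
    assert (Rabs (F a b - F a0 s) < 1) by (apply Hd; auto; apply Rabs_def1; lra).
    assert (Rabs (F a b) <= Rabs (F a b - F a0 s) + Rabs (F a0 s)).
    { replace (F a b) with ((F a b - F a0 s) + F a0 s) at 1 by ring. apply Rabs_triang. }
    lra.
Qed.

Lemma continuous2_bounded_on_square (F : R -> R -> R) (Rr : R) :
  (forall a b, continuous2_at F a b) ->
  exists B, 0 <= B /\ forall a b, Rabs a <= Rr -> Rabs b <= Rr -> Rabs (F a b) <= B.
Proof.
  intros hF.
  destruct (Rle_dec 0 Rr) as [hR|hR]; cycle 1.
  { exists 0; split; [lra|]; intros a b ha. generalize (Rabs_pos a); lra. }
  set (L := fun c d => exists B, forall a b, c <= a <= d -> - Rr <= b <= Rr -> Rabs (F a b) <= B).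
  assert (H : L (- Rr) Rr).
  { apply interval_induction; [lra| |].
    - intros c d e _ _ _ _ [B1 H1] [B2 H2]. exists (Rmax B1 B2).
      intros a b ha hb. destruct (Rle_dec a d).
      + eapply Rle_trans; [apply H1|apply Rmax_l]; lra.
      + eapply Rle_trans; [apply H2|apply Rmax_r]; lra.
    - intros s hs.
      destruct (continuous2_bounded_near_column F Rr s hF ltac:(lra)) as [r [B [hr Hr]]].
      exists r; split; auto. intros c d _ _ _ hc hd. exists B.
      intros a b ha hb. apply Hr; auto. apply Rabs_def1; lra. }
  destruct H as [B HB]. exists (Rmax 0 B); split; [apply Rmax_l|].
  intros a b ha hb. apply Rabs_le_inv in ha. apply Rabs_le_inv in hb.
  eapply Rle_trans; [apply HB; lra|apply Rmax_r].
Qed.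

Lemma continuous2_uniform_at_0 (G : R -> R -> R) a b : a <= b ->
  (forall s, continuous2_at G 0 s) ->
  forall e, 0 < e -> exists d, 0 < d /\ forall s t, a <= s <= b -> Rabs t < d ->
    Rabs (G t s - G 0 s) < e.
Proof.
  intros hab hG e he.
  set (L := fun c d => exists r, 0 < r /\ forall s t, c <= s <= d -> Rabs t < r ->
    Rabs (G t s - G 0 s) < e).
  change (L a b). apply interval_induction; auto.
  - intros c d e' _ _ _ _ [r1 [h1 H1]] [r2 [h2 H2]].
    exists (Rmin r1 r2); split; [apply Rmin_pos; auto|]. intros s t hs ht.
    generalize (Rmin_l r1 r2) (Rmin_r r1 r2); intros m1 m2.
    destruct (Rle_dec s d); [apply H1|apply H2]; lra.
  - intros s0 hs0. destruct (hG s0 (e/2) ltac:(lra)) as [d [hd Hd]].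
    exists d; split; auto. intros c d' _ _ _ hc hd'. exists d; split; auto.
    intros s t hs ht.
    assert (A1 : Rabs (G t s - G 0 s0) < e/2).
    { apply Hd; [rewrite Rminus_0_r; auto|apply Rabs_def1; lra]. }
    assert (A2 : Rabs (G 0 s - G 0 s0) < e/2).
    { apply Hd; [rewrite Rminus_diag, Rabs_R0; auto|apply Rabs_def1; lra]. }
    replace (G t s - G 0 s) with ((G t s - G 0 s0) - (G 0 s - G 0 s0)) by ring.
    eapply Rle_lt_trans; [apply Rabs_triang|]. rewrite Rabs_Ropp. lra.
Qed.

Lemma derivable_pt_lim_RInt_param (G G1 : R -> R -> R) a b :
  (forall t, continuity (G t)) ->
  (forall t s, derivable_pt_lim (fun t => G t s) t (G1 t s)) ->
  (forall s, continuous2_at G1 0 s) ->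
  derivable_pt_lim (fun t => RInt (G t) a b) 0 (RInt (G1 0) a b).
Proof.
  intros hG hd hj e he.
  assert (hc1 : continuity (G1 0)) by (intros s; apply continuity_pt_of_continuous2_at; auto).
  assert (hpos : 0 < Rabs (b - a) + 1) by (generalize (Rabs_pos (b - a)); lra).
  set (e' := e / (Rabs (b - a) + 1)).
  assert (he' : 0 < e') by (apply Rdiv_lt_0_compat; auto).
  assert (he'2 : e' * (Rabs (b - a) + 1) = e) by (unfold e'; field; lra).
  destruct (continuous2_uniform_at_0 G1 (Rmin a b) (Rmax a b)
             (Rle_trans _ _ _ (Rmin_l a b) (Rmax_l a b)) hj e' he') as [d [hd0 Hd]].
  exists (mkposreal d hd0). intros h hh0 hhd. simpl in hhd. rewrite Rplus_0_l.
  assert (hcd : continuity (fun s => G h s - G 0 s)) by (apply continuity_minus; auto).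
  assert (hcq : continuity (fun s => / h * (G h s - G 0 s))) by (apply continuity_scal; auto).
  assert (hc : continuity (fun s => / h * (G h s - G 0 s) - G1 0 s)).
  { apply continuity_minus; auto. }
  assert (E : (RInt (G h) a b - RInt (G 0) a b) / h - RInt (G1 0) a b =
     RInt (fun s => / h * (G h s - G 0 s) - G1 0 s) a b).
  { rewrite RInt_minus, RInt_scal, RInt_minus by auto. unfold Rdiv; ring. }
  rewrite E. eapply Rle_lt_trans.
  - apply (Rabs_RInt_le _ _ _ e'); auto.
    intros s hs.
    destruct (MVT_abs (fun t => G t s - G1 0 s * t) (fun t => G1 t s - G1 0 s) 0 h)
      as [c [Hc Hc']].
    { intros c _. apply derivable_pt_lim_minus; auto. apply derivable_pt_lim_linear. }
    assert (hc_small : Rabs c < d).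
    { unfold Rmin, Rmax in Hc'. revert hhd. unfold Rabs.
      destruct (Rle_dec 0 h); destruct Rcase_abs; destruct Rcase_abs; lra. }
    assert (B : Rabs (G1 c s - G1 0 s) < e') by (apply Hd; auto).
    replace (/ h * (G h s - G 0 s) - G1 0 s) with
       (/ h * ((G h s - G1 0 s * h) - (G 0 s - G1 0 s * 0))) by (field; auto).
    rewrite Rabs_mult, Hc, Rminus_0_r, Rabs_inv.
    assert (hh : 0 < Rabs h) by (apply Rabs_pos_lt; auto).
    replace (/ Rabs h * (Rabs (G1 c s - G1 0 s) * Rabs h)) with (Rabs (G1 c s - G1 0 s)) by (field; lra).
    lra.
  - rewrite <- he'2. apply Rmult_lt_compat_l; lra.
Qed.

(** The mean value theorem in the first variable reduces this to the joint
    continuity of [f1] and of the product. *)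
Lemma derivable_pt_lim_comp2_fst (f f1 : R -> R -> R) (P Q : R -> R) t0 P' :
  (forall a b, derivable_pt_lim (fun s => f s b) a (f1 a b)) ->
  continuous2_at f1 (P t0) (Q t0) ->
  derivable_pt_lim P t0 P' -> continuity_pt Q t0 ->
  derivable_pt_lim (fun t => f (P t) (Q t) - f (P t0) (Q t)) t0 (f1 (P t0) (Q t0) * P').
Proof.
  intros hf1 hj hP hQ e he.
  set (P0 := P t0). set (A := f1 P0 (Q t0)).
  destruct (continuous2_at_mult (fun x _ => x) (fun _ y => y) A P'
              (continuous2_at_fst _ _) (continuous2_at_snd _ _) e he) as [d [hd Hd]].
  destruct (hP d hd) as [d1 Hd1].
  destruct (hj d hd) as [d2 [hd2 Hd2]].
  destruct (continuity_pt_near P t0 d2 (continuity_pt_derivable_pt_lim P t0 P' hP) hd2)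
    as [d3 [hd3 Hd3]].
  destruct (continuity_pt_near Q t0 d2 hQ hd2) as [d4 [hd4 Hd4]].
  assert (hd' : 0 < Rmin d1 (Rmin d3 d4)) by (apply Rmin_pos; [apply cond_pos|apply Rmin_pos; auto]).
  exists (mkposreal _ hd'). intros h hh0 hh. simpl in hh.
  generalize (Rmin_l d1 (Rmin d3 d4)) (Rmin_r d1 (Rmin d3 d4)) (Rmin_l d3 d4) (Rmin_r d3 d4).
  intros m1 m2 m3 m4.
  specialize (Hd1 h hh0 ltac:(lra)).
  assert (HP3 : Rabs (P (t0 + h) - P0) < d2).
  { apply Hd3. replace (t0 + h - t0) with h by ring. lra. }
  assert (HQ4 : Rabs (Q (t0 + h) - Q t0) < d2).
  { apply Hd4. replace (t0 + h - t0) with h by ring. lra. }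
  destruct (MVT_between (fun a => f a (Q (t0 + h))) (fun a => f1 a (Q (t0 + h))) P0 (P (t0 + h)))
    as [xi [hxi Exi]]; [intros; apply hf1|].
  assert (hxi' : Rabs (xi - P0) < d2).
  { revert HP3 hxi. unfold Rmin, Rmax, Rabs.
    destruct (Rle_dec P0 (P (t0 + h))); repeat destruct Rcase_abs; lra. }
  specialize (Hd2 xi (Q (t0 + h)) hxi' HQ4).
  match goal with |- Rabs (?q - _) < _ =>
    replace q with (f1 xi (Q (t0 + h)) * ((P (t0 + h) - P0) / h)) end.
  - apply Hd; auto.
  - rewrite Exi. field. auto.
Qed.

Lemma derivable_pt_lim_comp2 (f f1 f2 : R -> R -> R) (P Q : R -> R) t0 P' Q' :
  (forall a b, derivable_pt_lim (fun s => f s b) a (f1 a b)) ->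
  derivable_pt_lim (fun s => f (P t0) s) (Q t0) (f2 (P t0) (Q t0)) ->
  continuous2_at f1 (P t0) (Q t0) ->
  derivable_pt_lim P t0 P' -> derivable_pt_lim Q t0 Q' ->
  derivable_pt_lim (fun t => f (P t) (Q t)) t0 (f1 (P t0) (Q t0) * P' + f2 (P t0) (Q t0) * Q').
Proof.
  intros hf1 hf2 hj hP hQ.
  apply (derivable_pt_lim_ext (fun t => (f (P t) (Q t) - f (P t0) (Q t)) + f (P t0) (Q t)));
    [intros; ring|].
  apply derivable_pt_lim_plus.
  - apply derivable_pt_lim_comp2_fst; auto. exact (continuity_pt_derivable_pt_lim Q t0 Q' hQ).
  - apply (derivable_pt_lim_comp Q (fun s => f (P t0) s)); auto.
Qed.

Lemma lipschitz_of_partials_bounded (F Fa Fb : R -> R -> R) R0 L :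
  (forall a b, derivable_pt_lim (fun s => F s b) a (Fa a b)) ->
  (forall a b, derivable_pt_lim (fun s => F a s) b (Fb a b)) ->
  (forall a b, Rabs a <= R0 -> Rabs b <= R0 -> Rabs (Fa a b) <= L /\ Rabs (Fb a b) <= L) ->
  forall p q p' q', Rabs p <= R0 -> Rabs q <= R0 -> Rabs p' <= R0 -> Rabs q' <= R0 ->
    Rabs (F p' q' - F p q) <= L * (Rabs (p' - p) + Rabs (q' - q)).
Proof.
  intros ha hb hB p q p' q' hp hq hp' hq'.
  destruct (MVT_between (fun s => F s q') (fun s => Fa s q') p p') as [c [hc Ec]]; [intros; apply ha|].
  destruct (MVT_between (fun s => F p s) (fun s => Fb p s) q q') as [c' [hc' Ec']]; [intros; apply hb|].
  replace (F p' q' - F p q) with ((F p' q' - F p q') + (F p q' - F p q)) by ring.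
  rewrite Ec, Ec'.
  assert (hcR : Rabs c <= R0).
  { apply Rabs_le_inv in hp. apply Rabs_le_inv in hp'. apply Rabs_le.
    unfold Rmin, Rmax in hc; destruct Rle_dec; lra. }
  assert (hcR' : Rabs c' <= R0).
  { apply Rabs_le_inv in hq. apply Rabs_le_inv in hq'. apply Rabs_le.
    unfold Rmin, Rmax in hc'; destruct Rle_dec; lra. }
  destruct (hB c q' hcR hq') as [B1 _]. destruct (hB p c' hp hcR') as [_ B2].
  eapply Rle_trans; [apply Rabs_triang|]. rewrite !Rabs_mult.
  assert (Rabs (Fa c q') * Rabs (p' - p) <= L * Rabs (p' - p)).
  { apply Rmult_le_compat_r; [apply Rabs_pos|auto]. }
  assert (Rabs (Fb p c') * Rabs (q' - q) <= L * Rabs (q' - q)).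
  { apply Rmult_le_compat_r; [apply Rabs_pos|auto]. }
  lra.
Qed.

(** * Partial derivatives of [C^2] functions on [pt] *)

Definition mk2 (a b : R) : pt := fun i => match i with O => a | 1%nat => b | _ => 0 end.
Definition mk3 (a b c : R) : pt :=
  fun i => match i with O => a | 1%nat => b | 2%nat => c | _ => 0 end.

Lemma upd_mk2_0 a b s : upd (mk2 a b) 0 s = mk2 s b.
Proof. apply functional_extensionality; intros [|[|]]; reflexivity. Qed.
Lemma upd_mk2_1 a b s : upd (mk2 a b) 1 s = mk2 a s.
Proof. apply functional_extensionality; intros [|[|]]; reflexivity. Qed.
Lemma upd_mk3_0 a b c s : upd (mk3 a b c) 0 s = mk3 s b c.
Proof. apply functional_extensionality; intros [|[|[|]]]; reflexivity. Qed.
Lemma upd_mk3_1 a b c s : upd (mk3 a b c) 1 s = mk3 a s c.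
Proof. apply functional_extensionality; intros [|[|[|]]]; reflexivity. Qed.

Lemma continuous2_at_of_cont_at (g : pt -> R) a b : cont_at 2 g (mk2 a b) ->
  continuous2_at (fun a b => g (mk2 a b)) a b.
Proof.
  intros H e he. destruct (H e he) as [d [hd Hd]]. exists d; split; auto.
  intros a' b' ha hb. apply Hd; intros [|[|]] hi; simpl; auto; lia.
Qed.

Lemma continuous3_at_of_cont_at (g : pt -> R) a b c : cont_at 3 g (mk3 a b c) ->
  continuous3_at (fun a b c => g (mk3 a b c)) a b c.
Proof.
  intros H e he. destruct (H e he) as [d [hd Hd]]. exists d; split; auto.
  intros a' b' c' ha hb hc. apply Hd; intros [|[|[|]]] hi; simpl; auto; lia.
Qed.

Lemma continuity_pt_of_cont_at (g : R -> R) s :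
  cont_at 1 (fun p => g (p O)) (fun _ => s) -> continuity_pt g s.
Proof.
  intros H e he. destruct (H e he) as [d [hd Hd]]. exists d; split; auto.
  intros x [_ hx]. simpl in hx; unfold Rdist in hx.
  apply (Hd (fun i => match i with O => x | _ => s end)).
  - intros [|i] hi; [auto|lia].
  - intros [|i] hi; [lia|auto].
Qed.

Lemma C2_partials_2d (F F1 F2 : R -> R -> R) : Ck 2 2 (fun p => F (p O) (p 1%nat)) ->
  (forall a b, derivable_pt_lim (fun s => F s b) a (F1 a b)) ->
  (forall a b, derivable_pt_lim (fun s => F a s) b (F2 a b)) ->
  exists F11 F12 F21 F22 : R -> R -> R,
   (forall a b, continuous2_at F a b) /\
   (forall a b, continuous2_at F1 a b) /\ (forall a b, continuous2_at F2 a b) /\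
   (forall a b, continuous2_at F11 a b) /\ (forall a b, continuous2_at F12 a b) /\
   (forall a b, continuous2_at F21 a b) /\ (forall a b, continuous2_at F22 a b) /\
   (forall a b, derivable_pt_lim (fun s => F1 s b) a (F11 a b)) /\
   (forall a b, derivable_pt_lim (fun s => F1 a s) b (F12 a b)) /\
   (forall a b, derivable_pt_lim (fun s => F2 s b) a (F21 a b)) /\
   (forall a b, derivable_pt_lim (fun s => F2 a s) b (F22 a b)).
Proof.
  simpl. intros [Hc Hp] hF1 hF2.
  destruct (Hp 0%nat ltac:(lia)) as [g0 [Hg0 [Hc0 Hp0]]].
  destruct (Hp 1%nat ltac:(lia)) as [g1 [Hg1 [Hc1 Hp1]]].
  destruct (Hp0 0%nat ltac:(lia)) as [g00 [Hg00 Hc00]].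
  destruct (Hp0 1%nat ltac:(lia)) as [g01 [Hg01 Hc01]].
  destruct (Hp1 0%nat ltac:(lia)) as [g10 [Hg10 Hc10]].
  destruct (Hp1 1%nat ltac:(lia)) as [g11 [Hg11 Hc11]].
  assert (E1 : forall a b, F1 a b = g0 (mk2 a b)).
  { intros a b. eapply uniqueness_limite; [apply hF1|]. apply (Hg0 (mk2 a b)). }
  assert (E2 : forall a b, F2 a b = g1 (mk2 a b)).
  { intros a b. eapply uniqueness_limite; [apply hF2|]. apply (Hg1 (mk2 a b)). }
  exists (fun a b => g00 (mk2 a b)), (fun a b => g01 (mk2 a b)),
    (fun a b => g10 (mk2 a b)), (fun a b => g11 (mk2 a b)).
  rewrite (functional_extensionality F1 _ (fun a => functional_extensionality _ _ (E1 a))),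
          (functional_extensionality F2 _ (fun a => functional_extensionality _ _ (E2 a))).
  repeat split; intros;
    try (apply (continuous2_at_of_cont_at (fun p => F (p O) (p 1%nat))); apply Hc);
    try (apply continuous2_at_of_cont_at; auto);
    unfold has_partial in *;
    [generalize (Hg00 (mk2 a b)) | generalize (Hg01 (mk2 a b))
    |generalize (Hg10 (mk2 a b)) | generalize (Hg11 (mk2 a b))];
    apply derivable_pt_lim_ext; intros; simpl;
    rewrite ?upd_mk2_0, ?upd_mk2_1; reflexivity.
Qed.

Lemma C2_partials_3d (F F3 : R -> R -> R -> R) :
  Ck 2 3 (fun p => F (p O) (p 1%nat) (p 2%nat)) ->
  (forall a b c, derivable_pt_lim (fun s => F a b s) c (F3 a b c)) ->
  exists F1 F2 F31 F32 : R -> R -> R -> R,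
   (forall a b c, continuous3_at F a b c) /\
   (forall a b c, continuous3_at F1 a b c) /\ (forall a b c, continuous3_at F2 a b c) /\
   (forall a b c, continuous3_at F3 a b c) /\
   (forall a b c, continuous3_at F31 a b c) /\ (forall a b c, continuous3_at F32 a b c) /\
   (forall a b c, derivable_pt_lim (fun s => F s b c) a (F1 a b c)) /\
   (forall a b c, derivable_pt_lim (fun s => F a s c) b (F2 a b c)) /\
   (forall a b c, derivable_pt_lim (fun s => F3 s b c) a (F31 a b c)) /\
   (forall a b c, derivable_pt_lim (fun s => F3 a s c) b (F32 a b c)).
Proof.
  simpl. intros [Hc Hp] hF3.
  destruct (Hp 0%nat ltac:(lia)) as [g0 [Hg0 [Hc0 _]]].
  destruct (Hp 1%nat ltac:(lia)) as [g1 [Hg1 [Hc1 _]]].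
  destruct (Hp 2%nat ltac:(lia)) as [g2 [Hg2 [Hc2 Hp2]]].
  destruct (Hp2 0%nat ltac:(lia)) as [g20 [Hg20 Hc20]].
  destruct (Hp2 1%nat ltac:(lia)) as [g21 [Hg21 Hc21]].
  assert (E3 : forall a b c, F3 a b c = g2 (mk3 a b c)).
  { intros a b c. eapply uniqueness_limite; [apply hF3|]. apply (Hg2 (mk3 a b c)). }
  exists (fun a b c => g0 (mk3 a b c)), (fun a b c => g1 (mk3 a b c)),
    (fun a b c => g20 (mk3 a b c)), (fun a b c => g21 (mk3 a b c)).
  replace F3 with (fun a b c => g2 (mk3 a b c))
    by (do 3 (apply functional_extensionality; intro); symmetry; apply E3).
  repeat split; intros;
    try (apply (continuous3_at_of_cont_at (fun p => F (p O) (p 1%nat) (p 2%nat))); apply Hc);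
    try (apply continuous3_at_of_cont_at; auto);
    unfold has_partial in *;
    [apply (Hg0 (mk3 a b c)) | apply (Hg1 (mk3 a b c))
    |generalize (Hg20 (mk3 a b c)) | generalize (Hg21 (mk3 a b c))];
    apply derivable_pt_lim_ext; intros; simpl;
    rewrite ?upd_mk3_0, ?upd_mk3_1; reflexivity.
Qed.

(** * Principal minors *)

Fixpoint nodupb (l : list nat) : bool :=
  match l with [] => true | x :: l => negb (existsb (Nat.eqb x) l) && nodupb l end.

Lemma nodupb_NoDup l : NoDup l -> nodupb l = true.
Proof.
  induction 1 as [|x l hx _ IH]; simpl; auto.
  rewrite IH, Bool.andb_true_r. apply Bool.negb_true_iff, Bool.not_true_iff_false.
  rewrite existsb_exists. intros [y [hy e]]. apply Nat.eqb_eq in e. subst; auto.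
Qed.

Lemma principal_index_length S : principal_index S -> (length S <= 4)%nat.
Proof.
  intros [_ [hnd hlt]]. apply (NoDup_incl_length (l' := [0; 1; 2; 3]%nat) hnd).
  intros i hi. rewrite Forall_forall in hlt. specialize (hlt i hi). simpl; lia.
Qed.

(** Row 0 and column 3 are those of the identity, so a principal minor only
    sees the middle block [J i j], [i, j in {1, 2}]. *)
Lemma principal_minor_block (J : nat -> nat -> R) S :
  J 0%nat 0%nat = 1 -> J 0%nat 1%nat = 0 -> J 0%nat 2%nat = 0 -> J 0%nat 3%nat = 0 ->
  J 1%nat 3%nat = 0 -> J 2%nat 3%nat = 0 -> J 3%nat 3%nat = 1 ->
  principal_index S ->
  principal_minor J S =
    if existsb (Nat.eqb 1) S then
      if existsb (Nat.eqb 2) S then J 1%nat 1%nat * J 2%nat 2%nat - J 1%nat 2%nat * J 2%nat 1%nat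
      else J 1%nat 1%nat
    else if existsb (Nat.eqb 2) S then J 2%nat 2%nat else 1.
Proof.
  intros h00 h01 h02 h03 h13 h23 h33 hS.
  pose proof (principal_index_length S hS) as hlen.
  destruct hS as [hne [hnd hlt]]. apply nodupb_NoDup in hnd.
  destruct S as [|i0 [|i1 [|i2 [|i3 [|i4 S]]]]]; simpl in hlen; try lia; try congruence;
  repeat match goal with H : Forall _ (_ :: _) |- _ => inversion_clear H end;
  repeat match goal with
  | H : (?i < 4)%nat |- _ => destruct i as [|[|[|[|i]]]]; [| | | |lia]; clear H
  end;
  try discriminate hnd;
  unfold principal_minor; simpl; rewrite ?h00, ?h01, ?h02, ?h03, ?h13, ?h23, ?h33; ring.
Qed.

Lemma principal_minor_block_near_1 (J : nat -> nat -> R) (r : R) :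
  0 <= r <= 1/2 ->
  J 0%nat 0%nat = 1 -> J 0%nat 1%nat = 0 -> J 0%nat 2%nat = 0 -> J 0%nat 3%nat = 0 ->
  J 1%nat 3%nat = 0 -> J 2%nat 3%nat = 0 -> J 3%nat 3%nat = 1 ->
  Rabs (J 1%nat 1%nat - 1) <= r -> Rabs (J 2%nat 2%nat - 1) <= r ->
  Rabs (J 1%nat 2%nat) <= r -> Rabs (J 2%nat 1%nat) <= r ->
  forall S, principal_index S -> 1 - 3 * r <= principal_minor J S <= 1 + 3 * r.
Proof.
  intros hr h00 h01 h02 h03 h13 h23 h33 ha hd hb hc S hS.
  apply Rabs_le_inv in ha. apply Rabs_le_inv in hd.
  apply Rabs_le_inv in hb. apply Rabs_le_inv in hc.
  rewrite principal_minor_block by auto.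
  destruct existsb, existsb; split; nra.
Qed.

(** * The regularized flow *)

Section Flow.

Variables (f f1 f2 : R -> R -> R) (delta : R -> R -> R)
  (x1 x2 x1d x2d : R -> R -> R -> R -> R).

Hypothesis Hdelta : strict_delta_net delta.

Lemma delta_continuity eps : 0 < eps <= 1 -> continuity (delta eps).
Proof.
  intros heps s. destruct Hdelta as [Hs _].
  apply continuity_pt_of_cont_at. exact (Hs eps heps 0%nat (fun _ => s)).
Qed.

(** At [s = +-eps] the support condition says nothing; continuity does. *)
Lemma delta_outside eps s : 0 < eps <= 1 -> (s <= - eps \/ eps <= s) -> delta eps s = 0.
Proof.
  intros heps hs. destruct Hdelta as [_ [Hsupp _]].
  destruct (Req_dec (delta eps s) 0) as [?|hne]; auto. exfalso.
  destruct (continuity_pt_near (delta eps) s (Rabs (delta eps s)) (delta_continuity eps heps s)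
              (Rabs_pos_lt _ hne)) as [r [hr Hr]].
  set (s' := if Rle_dec s (- eps) then s - r/2 else s + r/2).
  assert (hs' : Rabs (s' - s) < r) by (unfold s'; destruct Rle_dec; apply Rabs_def1; lra).
  specialize (Hr s' hs').
  assert (E : delta eps s' = 0).
  { destruct (Req_dec (delta eps s') 0) as [?|h']; auto.
    apply Hsupp in h'; auto. unfold s' in h'; destruct Rle_dec; lra. }
  rewrite E, Rminus_0_l, Rabs_Ropp in Hr. lra.
Qed.

Definition delta_mass eps u := RInt (fun s => Rabs (delta eps s)) (- eps) u.

Lemma continuity_Rabs_delta eps : 0 < eps <= 1 -> continuity (fun s => Rabs (delta eps s)).
Proof.
  intros heps s. apply (continuity_pt_comp (delta eps) Rabs).
  - apply delta_continuity; auto.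
  - apply Rcontinuity_abs.
Qed.

Lemma derivable_pt_lim_delta_mass eps u : 0 < eps <= 1 ->
  derivable_pt_lim (delta_mass eps) u (Rabs (delta eps u)).
Proof.
  intros heps. apply (derivable_pt_lim_RInt (fun s => Rabs (delta eps s))).
  apply continuity_Rabs_delta; auto.
Qed.

Lemma delta_mass_start eps : 0 < eps <= 1 -> delta_mass eps (- eps) = 0.
Proof. intros heps. apply RInt_refl, continuity_Rabs_delta; auto. Qed.

Lemma delta_mass_le eps Cd u : 0 < eps <= 1 -> delta_mass eps eps <= Cd -> - eps <= u ->
  delta_mass eps u <= Cd.
Proof.
  intros heps hC hu. destruct (Rle_dec u eps).
  - assert (delta_mass eps u <= delta_mass eps eps); [|lra].
    apply (le_of_derive_nonneg _ (fun s => Rabs (delta eps s))); [lra| |].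
    + intros; apply derivable_pt_lim_delta_mass; auto.
    + intros; apply Rabs_pos.
  - assert (delta_mass eps eps = delta_mass eps u); [|lra].
    apply eq_of_derive_0. intros c hc. rewrite Rmin_left, Rmax_right in hc by lra.
    replace 0 with (Rabs (delta eps c)).
    + apply derivable_pt_lim_delta_mass; auto.
    + rewrite delta_outside by (auto; lra). apply Rabs_R0.
Qed.

Lemma Rabs_incr_le_delta_mass eps g g' K Cd t : 0 < eps <= 1 -> 0 <= K ->
  delta_mass eps eps <= Cd -> - eps <= t ->
  (forall u, - eps <= u <= t -> derivable_pt_lim g u (g' u)) ->
  (forall u, - eps <= u <= t -> Rabs (g' u) <= K * Rabs (delta eps u)) ->
  Rabs (g t - g (- eps)) <= K * Cd.
Proof.
  intros heps hK hC ht hg hb.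
  assert (H : Rabs (g t - g (- eps)) <= K * delta_mass eps t - K * delta_mass eps (- eps)).
  { apply (Rabs_incr_le_of_derive g g' (fun u => K * delta_mass eps u)
                                    (fun u => K * Rabs (delta eps u))); auto.
    intros; apply derivable_pt_lim_scal, derivable_pt_lim_delta_mass; auto. }
  rewrite delta_mass_start, Rmult_0_r, Rminus_0_r in H by auto.
  assert (K * delta_mass eps t <= K * Cd) by (apply Rmult_le_compat_l; [|apply delta_mass_le]; auto).
  lra.
Qed.

Hypothesis Hx1d : forall eps X1 X2 U, 0 < eps <= 1 ->
  derivable_pt_lim (fun u => x1 eps X1 X2 u) U (x1d eps X1 X2 U).
Hypothesis Hx2d : forall eps X1 X2 U, 0 < eps <= 1 ->
  derivable_pt_lim (fun u => x2 eps X1 X2 u) U (x2d eps X1 X2 U).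

Definition flow_ode eps X1 X2 :=
  (forall U, derivable_pt_lim (fun u => x1d eps X1 X2 u) U
            (1 / 2 * f1 (x1 eps X1 X2 U) (x2 eps X1 X2 U) * delta eps U)) /\
  (forall U, derivable_pt_lim (fun u => x2d eps X1 X2 u) U
            (1 / 2 * f2 (x1 eps X1 X2 U) (x2 eps X1 X2 U) * delta eps U)) /\
  x1 eps X1 X2 (-1) = X1 /\ x2 eps X1 X2 (-1) = X2 /\
  x1d eps X1 X2 (-1) = 0 /\ x2d eps X1 X2 (-1) = 0.

Lemma flow_before_support eps X1 X2 U : 0 < eps <= 1 -> flow_ode eps X1 X2 -> U <= - eps ->
  x1d eps X1 X2 U = 0 /\ x2d eps X1 X2 U = 0 /\ x1 eps X1 X2 U = X1 /\ x2 eps X1 X2 U = X2.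
Proof.
  intros heps [o1 [o2 [i1 [i2 [i3 i4]]]]] hU.
  assert (hm : forall c c', c <= - eps -> Rmin c (-1) <= c' <= Rmax c (-1) -> c' <= - eps).
  { intros c c' hc hc'. unfold Rmin, Rmax in hc'. destruct Rle_dec; lra. }
  assert (z1 : forall c, c <= - eps -> x1d eps X1 X2 c = 0).
  { intros c hc. rewrite <- i3. apply eq_of_derive_0. intros c' hc'.
    replace 0 with (1 / 2 * f1 (x1 eps X1 X2 c') (x2 eps X1 X2 c') * delta eps c'); [apply o1|].
    rewrite (delta_outside eps c' heps (or_introl (hm c c' hc hc'))). ring. }
  assert (z2 : forall c, c <= - eps -> x2d eps X1 X2 c = 0).
  { intros c hc. rewrite <- i4. apply eq_of_derive_0. intros c' hc'.
    replace 0 with (1 / 2 * f2 (x1 eps X1 X2 c') (x2 eps X1 X2 c') * delta eps c'); [apply o2|].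
    rewrite (delta_outside eps c' heps (or_introl (hm c c' hc hc'))). ring. }
  repeat split; auto.
  - rewrite <- i1 at 2. apply eq_of_derive_0. intros c hc.
    rewrite <- (z1 c (hm U c hU hc)). apply Hx1d; auto.
  - rewrite <- i2 at 2. apply eq_of_derive_0. intros c hc.
    rewrite <- (z2 c (hm U c hU hc)). apply Hx2d; auto.
Qed.

Lemma velocity_bound eps a b G Cd t : 0 < eps <= 1 -> flow_ode eps a b ->
  0 <= G -> delta_mass eps eps <= Cd ->
  (forall u, - eps <= u <= t -> Rabs (f1 (x1 eps a b u) (x2 eps a b u)) <= G /\
                               Rabs (f2 (x1 eps a b u) (x2 eps a b u)) <= G) ->
  forall u, - eps <= u <= t -> Rabs (x1d eps a b u) <= G / 2 * Cd /\ Rabs (x2d eps a b u) <= G / 2 * Cd.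
Proof.
  intros heps ho hG hC hb u hu.
  destruct (flow_before_support eps a b (- eps) heps ho ltac:(lra)) as [v1 [v2 _]].
  destruct ho as [o1 [o2 _]].
  assert (hslope : forall (fi : R -> R -> R) w, Rabs (fi (x1 eps a b w) (x2 eps a b w)) <= G ->
    Rabs (1 / 2 * fi (x1 eps a b w) (x2 eps a b w) * delta eps w) <= G / 2 * Rabs (delta eps w)).
  { intros fi w h. rewrite !Rabs_mult, (Rabs_pos_eq (1 / 2)) by lra.
    apply Rmult_le_compat_r; [apply Rabs_pos|lra]. }
  split.
  - rewrite <- (Rminus_0_r (x1d eps a b u)), <- v1.
    apply Rabs_incr_le_delta_mass with (g' := fun w => 1 / 2 * f1 (x1 eps a b w) (x2 eps a b w) * delta eps w);
      auto; try lra.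
    intros w hw. apply hslope, hb; lra.
  - rewrite <- (Rminus_0_r (x2d eps a b u)), <- v2.
    apply Rabs_incr_le_delta_mass with (g' := fun w => 1 / 2 * f2 (x1 eps a b w) (x2 eps a b w) * delta eps w);
      auto; try lra.
    intros w hw. apply hslope, hb; lra.
Qed.

(** As long as the trajectory stays in the unit box around [(a, b)], its
    speed is at most [W = G Cd / 2]; on a time interval of length [1/(4W)]
    it therefore stays in the box of radius [1/2]. *)
Lemma trajectory_bound eps a b G Cd eta : 0 < eps <= 1 -> flow_ode eps a b ->
  0 <= G -> 0 <= Cd -> delta_mass eps eps <= Cd -> - eps <= eta ->
  (eta + eps) * (G * Cd / 2) <= 1 / 4 ->
  (forall p q, Rabs (p - a) <= 1 -> Rabs (q - b) <= 1 -> Rabs (f1 p q) <= G /\ Rabs (f2 p q) <= G) ->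
  forall U, - eps <= U <= eta -> Rabs (x1 eps a b U - a) <= 1/2 /\ Rabs (x2 eps a b U - b) <= 1/2.
Proof.
  intros heps ho hG hC0 hC heta hsmall hGb.
  set (W := G * Cd / 2).
  assert (hW : 0 <= W) by (unfold W; apply Rmult_le_pos; [apply Rmult_le_pos|]; lra).
  destruct (flow_before_support eps a b (- eps) heps ho ltac:(lra)) as [_ [_ [y0 z0]]].
  set (g := fun u => Rabs (x1 eps a b u - a) + Rabs (x2 eps a b u - b)).
  assert (key : forall t, - eps <= t <= eta -> (forall u, - eps <= u <= t -> g u <= 1) ->
      Rabs (x1 eps a b t - a) <= 1/4 /\ Rabs (x2 eps a b t - b) <= 1/4).
  { intros t ht H.
    assert (hv : forall u, - eps <= u <= t -> Rabs (x1d eps a b u) <= W /\ Rabs (x2d eps a b u) <= W).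
    { replace W with (G / 2 * Cd) by (unfold W; field).
      apply velocity_bound; auto. intros w hw.
      specialize (H w hw). unfold g in H.
      apply hGb; generalize (Rabs_pos (x1 eps a b w - a)) (Rabs_pos (x2 eps a b w - b)); lra. }
    assert (W * (t + eps) <= W * (eta + eps)) by (apply Rmult_le_compat_l; lra).
    assert (P1 := Rabs_incr_le_of_derive_bound _ (x1d eps a b) W (- eps) t ltac:(lra)
                    (fun u _ => Hx1d eps a b u heps) (fun u hu => proj1 (hv u hu))).
    assert (P2 := Rabs_incr_le_of_derive_bound _ (x2d eps a b) W (- eps) t ltac:(lra)
                    (fun u _ => Hx2d eps a b u heps) (fun u hu => proj2 (hv u hu))).
    cbv beta in P1, P2. rewrite y0 in P1. rewrite z0 in P2. unfold W in *. split; lra. }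
  assert (B : forall u, - eps <= u <= eta -> g u <= 1/2).
  { apply (continuous_bootstrap g (- eps) eta 1 (1/2)); try lra.
    - unfold g. rewrite y0, z0, !Rminus_diag, Rabs_R0. lra.
    - intros u _. apply continuity_pt_plus; apply continuity_pt_Rabs_sub;
        eapply continuity_pt_derivable_pt_lim; apply Hx1d || apply Hx2d; auto.
    - intros t ht H. destruct (key t ht H). unfold g. lra. }
  intros U hU. destruct (key U hU) as [k1 k2]; [|lra].
  intros u hu. generalize (B u ltac:(lra)); lra.
Qed.

Lemma velocity_gap eps (fi : R -> R -> R) (yd yd' p q p' q' : R -> R) K Cd t :
  0 < eps <= 1 -> 0 <= K -> delta_mass eps eps <= Cd -> - eps <= t ->
  (forall u, derivable_pt_lim yd u (1 / 2 * fi (p u) (q u) * delta eps u)) ->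
  (forall u, derivable_pt_lim yd' u (1 / 2 * fi (p' u) (q' u) * delta eps u)) ->
  yd (- eps) = 0 -> yd' (- eps) = 0 ->
  (forall u, - eps <= u <= t -> Rabs (fi (p' u) (q' u) - fi (p u) (q u)) <= 2 * K) ->
  Rabs (yd' t - yd t) <= K * Cd.
Proof.
  intros heps hK hC ht hd hd' h0 h0' hb.
  replace (yd' t - yd t) with ((yd' t - yd t) - (yd' (- eps) - yd (- eps))) by (rewrite h0, h0'; ring).
  apply (Rabs_incr_le_delta_mass eps (fun u => yd' u - yd u)
           (fun u => 1 / 2 * fi (p' u) (q' u) * delta eps u - 1 / 2 * fi (p u) (q u) * delta eps u));
    auto.
  - intros; apply derivable_pt_lim_minus; auto.
  - intros u hu.
    replace (1 / 2 * fi (p' u) (q' u) * delta eps u - 1 / 2 * fi (p u) (q u) * delta eps u)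
      with (1 / 2 * (fi (p' u) (q' u) - fi (p u) (q u)) * delta eps u) by ring.
    rewrite !Rabs_mult, (Rabs_pos_eq (1 / 2)) by lra.
    apply Rmult_le_compat_r; [apply Rabs_pos|]. specialize (hb u hu). lra.
Qed.

Lemma velocity_difference_bound eps a b a' b' Cd L m t : 0 < eps <= 1 ->
  flow_ode eps a b -> flow_ode eps a' b' ->
  0 <= L -> 0 <= m -> delta_mass eps eps <= Cd -> - eps <= t ->
  (forall p q p' q', Rabs (p - a) <= 1 -> Rabs (q - b) <= 1 -> Rabs (p' - a) <= 1 -> Rabs (q' - b) <= 1 ->
     Rabs (f1 p' q' - f1 p q) <= L * (Rabs (p' - p) + Rabs (q' - q)) /\
     Rabs (f2 p' q' - f2 p q) <= L * (Rabs (p' - p) + Rabs (q' - q))) ->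
  (forall u, - eps <= u <= t -> Rabs (x1 eps a b u - a) <= 1 /\ Rabs (x2 eps a b u - b) <= 1 /\
      Rabs (x1 eps a' b' u - a) <= 1 /\ Rabs (x2 eps a' b' u - b) <= 1) ->
  (forall u, - eps <= u <= t ->
     Rabs (x1 eps a' b' u - x1 eps a b u) + Rabs (x2 eps a' b' u - x2 eps a b u) <= 2 * m) ->
  Rabs (x1d eps a' b' t - x1d eps a b t) <= L * m * Cd /\
  Rabs (x2d eps a' b' t - x2d eps a b t) <= L * m * Cd.
Proof.
  intros heps ho ho' hL hm hC ht HL HT hD.
  destruct (flow_before_support eps a b (- eps) heps ho ltac:(lra)) as [v1 [v2 _]].
  destruct (flow_before_support eps a' b' (- eps) heps ho' ltac:(lra)) as [v1' [v2' _]].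
  destruct ho as [o1 [o2 _]]. destruct ho' as [o1' [o2' _]].
  assert (hLm : 0 <= L * m) by (apply Rmult_le_pos; lra).
  assert (hlip : forall w, - eps <= w <= t ->
    Rabs (f1 (x1 eps a' b' w) (x2 eps a' b' w) - f1 (x1 eps a b w) (x2 eps a b w)) <= 2 * (L * m) /\
    Rabs (f2 (x1 eps a' b' w) (x2 eps a' b' w) - f2 (x1 eps a b w) (x2 eps a b w)) <= 2 * (L * m)).
  { intros w hw. destruct (HT w hw) as [t1 [t2 [t3 t4]]]. specialize (hD w hw).
    destruct (HL _ _ _ _ t1 t2 t3 t4) as [l1 l2]. split; nra. }
  split; [apply (velocity_gap eps f1 (x1d eps a b) (x1d eps a' b') (x1 eps a b) (x2 eps a b)
                   (x1 eps a' b') (x2 eps a' b') (L * m) Cd t)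
         |apply (velocity_gap eps f2 (x2d eps a b) (x2d eps a' b') (x1 eps a b) (x2 eps a b)
                   (x1 eps a' b') (x2 eps a' b') (L * m) Cd t)];
    auto; intros w hw; apply hlip; auto.
Qed.

(** Gronwall-type continuous induction: while the offset [x' - x] stays
    within [rho m] of [(a' - a, b' - b)], the velocities differ by at most
    [L m Cd], which on a time interval of length [eta + eps] improves the
    bound to [rho m / 2]. *)
Lemma flow_difference_bound eps a b a' b' Cd L eta rho : 0 < eps <= 1 ->
  flow_ode eps a b -> flow_ode eps a' b' ->
  0 <= L -> 0 <= Cd -> delta_mass eps eps <= Cd -> - eps <= eta -> 0 < rho <= 1 ->
  4 * ((eta + eps) * (L * Cd)) <= rho ->
  0 < Rabs (a' - a) + Rabs (b' - b) ->
  (forall p q p' q', Rabs (p - a) <= 1 -> Rabs (q - b) <= 1 -> Rabs (p' - a) <= 1 -> Rabs (q' - b) <= 1 ->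
     Rabs (f1 p' q' - f1 p q) <= L * (Rabs (p' - p) + Rabs (q' - q)) /\
     Rabs (f2 p' q' - f2 p q) <= L * (Rabs (p' - p) + Rabs (q' - q))) ->
  (forall U, - eps <= U <= eta -> Rabs (x1 eps a b U - a) <= 1 /\ Rabs (x2 eps a b U - b) <= 1 /\
      Rabs (x1 eps a' b' U - a) <= 1 /\ Rabs (x2 eps a' b' U - b) <= 1) ->
  forall U, - eps <= U <= eta ->
    Rabs ((x1 eps a' b' U - x1 eps a b U) - (a' - a)) + Rabs ((x2 eps a' b' U - x2 eps a b U) - (b' - b))
      <= rho * (Rabs (a' - a) + Rabs (b' - b)) / 2.
Proof.
  intros heps ho ho' hL hC0 hC heta hrho hsmall hm HL HT.
  set (m := Rabs (a' - a) + Rabs (b' - b)) in *.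
  destruct (flow_before_support eps a b (- eps) heps ho ltac:(lra)) as [_ [_ [y0 z0]]].
  destruct (flow_before_support eps a' b' (- eps) heps ho' ltac:(lra)) as [_ [_ [y0' z0']]].
  set (D1 := fun u => x1 eps a' b' u - x1 eps a b u).
  set (D2 := fun u => x2 eps a' b' u - x2 eps a b u).
  set (g := fun u => Rabs (D1 u - (a' - a)) + Rabs (D2 u - (b' - b))).
  assert (hrm : 0 < rho * m) by (apply Rmult_lt_0_compat; lra).
  apply (continuous_bootstrap g (- eps) eta (rho * m) (rho * m / 2)); try lra.
  - unfold g, D1, D2. rewrite y0, z0, y0', z0', !Rminus_diag, Rabs_R0. lra.
  - intros u _. apply continuity_pt_plus; apply continuity_pt_Rabs_sub; apply continuity_pt_minus;
      eapply continuity_pt_derivable_pt_lim; (apply Hx1d || apply Hx2d); auto.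
  - intros t ht H.
    assert (hD : forall u, - eps <= u <= t -> Rabs (D1 u) + Rabs (D2 u) <= 2 * m).
    { intros u hu. specialize (H u hu). unfold g in H.
      assert (Rabs (D1 u) <= Rabs (D1 u - (a' - a)) + Rabs (a' - a)).
      { replace (D1 u) with ((D1 u - (a' - a)) + (a' - a)) at 1 by ring. apply Rabs_triang. }
      assert (Rabs (D2 u) <= Rabs (D2 u - (b' - b)) + Rabs (b' - b)).
      { replace (D2 u) with ((D2 u - (b' - b)) + (b' - b)) at 1 by ring. apply Rabs_triang. }
      unfold m in *. nra. }
    set (K := L * m).
    assert (hK : 0 <= K) by (unfold K; apply Rmult_le_pos; lra).
    assert (hgap : forall u, - eps <= u <= t ->
       Rabs (x1d eps a' b' u - x1d eps a b u) <= K * Cd /\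
       Rabs (x2d eps a' b' u - x2d eps a b u) <= K * Cd).
    { intros u hu. apply (velocity_difference_bound eps a b a' b'); auto; try lra;
        intros w hw; [apply HT|apply hD]; lra. }
    assert (hKC : K * Cd * (t + eps) <= K * Cd * (eta + eps)).
    { apply Rmult_le_compat_l; [apply Rmult_le_pos|]; lra. }
    assert (P1 := Rabs_incr_le_of_derive_bound D1 (fun u => x1d eps a' b' u - x1d eps a b u) (K * Cd)
                    (- eps) t ltac:(lra)
                    (fun u _ => derivable_pt_lim_minus _ _ _ _ _ (Hx1d eps a' b' u heps) (Hx1d eps a b u heps))
                    (fun u hu => proj1 (hgap u hu))).
    assert (P2 := Rabs_incr_le_of_derive_bound D2 (fun u => x2d eps a' b' u - x2d eps a b u) (K * Cd)
                    (- eps) t ltac:(lra)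
                    (fun u _ => derivable_pt_lim_minus _ _ _ _ _ (Hx2d eps a' b' u heps) (Hx2d eps a b u heps))
                    (fun u hu => proj2 (hgap u hu))).
    unfold D1, D2 in P1, P2. rewrite y0, y0' in P1. rewrite z0, z0' in P2. unfold g, D1, D2.
    assert (2 * (K * Cd * (eta + eps)) <= rho * m / 2).
    { unfold K. replace (2 * (L * m * Cd * (eta + eps))) with (m * (2 * ((eta + eps) * (L * Cd)))) by ring.
      replace (rho * m / 2) with (m * (rho / 2)) by field. apply Rmult_le_compat_l; lra. }
    replace (t - - eps) with (t + eps) in P1, P2 by ring.
    lra.
Qed.

Lemma flow_difference_small eps a b a' b' Cd G L eta rho M : 0 < eps <= 1 ->
  flow_ode eps a b -> flow_ode eps a' b' ->
  Rabs a <= M + 1/2 -> Rabs b <= M + 1/2 -> Rabs (a' - a) <= 1/2 -> Rabs (b' - b) <= 1/2 ->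
  0 < Rabs (a' - a) + Rabs (b' - b) ->
  0 <= G -> 0 <= L -> 0 <= Cd -> delta_mass eps eps <= Cd -> 0 <= eta -> 0 < rho <= 1 ->
  (eta + eps) * (G * Cd / 2) <= 1 / 4 -> 4 * ((eta + eps) * (L * Cd)) <= rho ->
  (forall p q, Rabs p <= M + 2 -> Rabs q <= M + 2 -> Rabs (f1 p q) <= G /\ Rabs (f2 p q) <= G) ->
  (forall p q p' q', Rabs p <= M + 2 -> Rabs q <= M + 2 -> Rabs p' <= M + 2 -> Rabs q' <= M + 2 ->
     Rabs (f1 p' q' - f1 p q) <= L * (Rabs (p' - p) + Rabs (q' - q)) /\
     Rabs (f2 p' q' - f2 p q) <= L * (Rabs (p' - p) + Rabs (q' - q))) ->
  forall U, U <= eta ->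
    Rabs ((x1 eps a' b' U - x1 eps a b U) - (a' - a)) + Rabs ((x2 eps a' b' U - x2 eps a b U) - (b' - b))
      <= rho * (Rabs (a' - a) + Rabs (b' - b)) / 2.
Proof.
  intros heps ho ho' ha hb ha' hb' hm hG hL hC0 hC heta hrho hs1 hs2 HG HL U hU.
  assert (hrm : 0 < rho * (Rabs (a' - a) + Rabs (b' - b))) by (apply Rmult_lt_0_compat; lra).
  destruct (Rle_dec U (- eps)) as [hle|hgt].
  - destruct (flow_before_support eps a b U heps ho hle) as [_ [_ [e1 e2]]].
    destruct (flow_before_support eps a' b' U heps ho' hle) as [_ [_ [e1' e2']]].
    rewrite e1, e2, e1', e2', !Rminus_diag, Rabs_R0. lra.
  - assert (T : forall c d, Rabs (c - a) <= 1/2 -> Rabs (d - b) <= 1/2 -> flow_ode eps c d ->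
      forall u, - eps <= u <= eta -> Rabs (x1 eps c d u - c) <= 1/2 /\ Rabs (x2 eps c d u - d) <= 1/2).
    { intros c d hc hd hcd. apply (trajectory_bound eps c d G Cd eta); auto; try lra.
      intros p q hp hq. apply Rabs_le_of_sub_le in hp, hq, hc, hd. apply HG; lra. }
    apply (flow_difference_bound eps a b a' b' Cd L eta rho); auto; try lra.
    + intros p q p' q' hp hq hp' hq'. apply Rabs_le_of_sub_le in hp, hq, hp', hq'. apply HL; lra.
    + intros u hu.
      destruct (T a b ltac:(rewrite Rminus_diag, Rabs_R0; lra) ltac:(rewrite Rminus_diag, Rabs_R0; lra) ho u hu)
        as [t1 t2].
      destruct (T a' b' ha' hb' ho' u hu) as [t3 t4].
      assert (Rabs (x1 eps a' b' u - a) <= 1).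
      { replace (x1 eps a' b' u - a) with ((x1 eps a' b' u - a') + (a' - a)) by ring.
        eapply Rle_trans; [apply Rabs_triang|lra]. }
      assert (Rabs (x2 eps a' b' u - b) <= 1).
      { replace (x2 eps a' b' u - b) with ((x2 eps a' b' u - b') + (b' - b)) by ring.
        eapply Rle_trans; [apply Rabs_triang|lra]. }
      repeat split; lra.
Qed.

Hypothesis Hf : smooth 2 (fun p => f (p O) (p 1%nat)).
Hypothesis Hf1 : forall a b, derivable_pt_lim (fun s => f s b) a (f1 a b).
Hypothesis Hf2 : forall a b, derivable_pt_lim (fun s => f a s) b (f2 a b).

(** Along a solution, [d/ds (yd^2 + zd^2) = (f1 yd + f2 zd) delta], so the
    inner integral in [v_eps] is the kinetic energy [yd^2 + zd^2]. *)
Lemma RInt_energy eps (y z yd zd : R -> R) s :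
  0 < eps <= 1 ->
  continuity y -> continuity z -> continuity yd -> continuity zd ->
  (forall u, derivable_pt_lim yd u (1 / 2 * f1 (y u) (z u) * delta eps u)) ->
  (forall u, derivable_pt_lim zd u (1 / 2 * f2 (y u) (z u) * delta eps u)) ->
  yd (- eps) = 0 -> zd (- eps) = 0 ->
  RInt (fun r => (f1 (y r) (z r) * yd r + f2 (y r) (z r) * zd r) * delta eps r) (- eps) s
  = yd s * yd s + zd s * zd s.
Proof.
  intros heps cy cz cyd czd o1 o2 i1 i2.
  destruct (C2_partials_2d f f1 f2 (Hf 2%nat) Hf1 Hf2) as [F11 [F12 [F21 [F22 [_ [jf1 [jf2 _]]]]]]].
  assert (cF : forall F : R -> R -> R, (forall a b, continuous2_at F a b) ->
    continuity (fun r => F (y r) (z r))) by (intros F hF r; apply continuity_pt_comp2; auto).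
  rewrite (RInt_derive (fun s => yd s * yd s + zd s * zd s)).
  - rewrite i1, i2. ring.
  - apply continuity_mult; [|apply delta_continuity; auto].
    apply continuity_plus; apply continuity_mult; auto.
  - intros x.
    replace ((f1 (y x) (z x) * yd x + f2 (y x) (z x) * zd x) * delta eps x) with
      ((1 / 2 * f1 (y x) (z x) * delta eps x) * yd x + yd x * (1 / 2 * f1 (y x) (z x) * delta eps x)
       + ((1 / 2 * f2 (y x) (z x) * delta eps x) * zd x + zd x * (1 / 2 * f2 (y x) (z x) * delta eps x)))
      by field.
    apply (derivable_pt_lim_plus (fun s => yd s * yd s) (fun s => zd s * zd s));
      apply derivable_pt_lim_mult; auto.
Qed.

Lemma derivable_v_param eps V U (y z yd zd Y Z YD ZD : R -> R -> R) :
  0 < eps <= 1 ->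
  (forall t s, derivable_pt_lim (fun t => y t s) t (Y t s)) ->
  (forall t s, derivable_pt_lim (fun t => z t s) t (Z t s)) ->
  (forall t s, derivable_pt_lim (fun t => yd t s) t (YD t s)) ->
  (forall t s, derivable_pt_lim (fun t => zd t s) t (ZD t s)) ->
  (forall t s, continuous2_at y t s /\ continuous2_at z t s /\
               continuous2_at yd t s /\ continuous2_at zd t s /\
               continuous2_at Y t s /\ continuous2_at Z t s /\
               continuous2_at YD t s /\ continuous2_at ZD t s) ->
  (forall t, Rabs t < 1 ->
      (forall s, derivable_pt_lim (yd t) s (1 / 2 * f1 (y t s) (z t s) * delta eps s)) /\
      (forall s, derivable_pt_lim (zd t) s (1 / 2 * f2 (y t s) (z t s) * delta eps s)) /\
      yd t (- eps) = 0 /\ zd t (- eps) = 0) ->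
  exists l, derivable_pt_lim (fun t => V + RInt (fun s => f (y t s) (z t s) * delta eps s) (- eps) U
     + RInt (fun s => RInt (fun r => (f1 (y t r) (z t r) * yd t r + f2 (y t r) (z t r) * zd t r)
              * delta eps r) (- eps) s) (- eps) U) 0 l.
Proof.
  intros heps dy dz dyd dzd hj hode.
  destruct (C2_partials_2d f f1 f2 (Hf 2%nat) Hf1 Hf2) as [F11 [F12 [F21 [F22 [jf [jf1 [jf2 _]]]]]]].
  assert (hdc := delta_continuity eps heps).
  assert (hc : forall (F : R -> R -> R) t, (forall t s, continuous2_at F t s) -> continuity (F t)).
  { intros F t hF s. apply continuity_pt_of_continuous2_at; auto. }
  assert (cF : forall (F : R -> R -> R), (forall a b, continuous2_at F a b) -> forall t,
     continuity (fun s => F (y t s) (z t s))).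
  { intros F hF t s. apply continuity_pt_comp2; auto; apply continuity_pt_of_continuous2_at, hj. }
  set (G := fun t s => f (y t s) (z t s) * delta eps s).
  set (G1 := fun t s => (f1 (y t s) (z t s) * Y t s + f2 (y t s) (z t s) * Z t s) * delta eps s).
  set (H := fun t s => yd t s * yd t s + zd t s * zd t s).
  set (H1 := fun t s => YD t s * yd t s + yd t s * YD t s + (ZD t s * zd t s + zd t s * ZD t s)).
  exists (0 + RInt (G1 0) (- eps) U + RInt (H1 0) (- eps) U).
  apply (derivable_pt_lim_locally_ext (fun t => V + RInt (G t) (- eps) U + RInt (H t) (- eps) U)
           _ 0 (-1) 1); [lra| |].
  - intros t ht. unfold G. f_equal. apply RInt_ext. intros s.
    destruct (hode t ltac:(apply Rabs_def1; lra)) as [o1 [o2 [i1 i2]]].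
    unfold H. rewrite RInt_energy; auto; apply hc; intros; apply hj.
  - apply derivable_pt_lim_plus; [apply derivable_pt_lim_plus|].
    + apply derivable_pt_lim_const.
    + apply derivable_pt_lim_RInt_param.
      * intros t. apply continuity_mult; auto.
      * intros t s. apply derivable_pt_lim_scal_right.
        apply (derivable_pt_lim_comp2 f f1 f2 (fun t => y t s) (fun t => z t s)); auto.
      * intros s. unfold G1. apply continuous2_at_mult; [|apply continuous2_at_of_snd; auto].
        destruct (hj 0 s) as [j1 [j2 [_ [_ [j5 [j6 _]]]]]].
        apply continuous2_at_plus; apply continuous2_at_mult; auto; apply continuous2_at_comp; auto.
    + apply derivable_pt_lim_RInt_param.
      * intros t. apply continuity_plus; apply continuity_mult; apply hc; intros; apply hj.
      * intros t s. apply derivable_pt_lim_plus;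
          [apply (derivable_pt_lim_mult (fun t => yd t s) (fun t => yd t s))
          |apply (derivable_pt_lim_mult (fun t => zd t s) (fun t => zd t s))]; auto.
      * intros s. unfold H1. destruct (hj 0 s) as [_ [_ [j3 [j4 [_ [_ [j7 j8]]]]]]].
        repeat apply continuous2_at_plus; apply continuous2_at_mult; auto.
Qed.

Hypothesis Hx1s : forall eps, 0 < eps <= 1 -> smooth 3 (fun p => x1 eps (p O) (p 1%nat) (p 2%nat)).
Hypothesis Hx2s : forall eps, 0 < eps <= 1 -> smooth 3 (fun p => x2 eps (p O) (p 1%nat) (p 2%nat)).

Lemma v_partial_U eps X1 X2 V U : 0 < eps <= 1 ->
  exists l0, derivable_pt_lim (fun u => v_eps f f1 f2 delta x1 x2 x1d x2d eps X1 X2 V u) U l0.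
Proof.
  intros heps.
  destruct (C2_partials_2d f f1 f2 (Hf 2%nat) Hf1 Hf2) as [F11 [F12 [F21 [F22 [jf [jf1 [jf2 _]]]]]]].
  destruct (C2_partials_3d (x1 eps) (x1d eps) (Hx1s eps heps 2%nat) (fun a b c => Hx1d eps a b c heps))
    as [_ [_ [_ [_ [j0 [_ [_ [j3 _]]]]]]]].
  destruct (C2_partials_3d (x2 eps) (x2d eps) (Hx2s eps heps 2%nat) (fun a b c => Hx2d eps a b c heps))
    as [_ [_ [_ [_ [j0' [_ [_ [j3' _]]]]]]]].
  assert (hdc := delta_continuity eps heps).
  assert (cx : forall (F : R -> R -> R -> R), (forall a b c, continuous3_at F a b c) ->
    continuity (F X1 X2)) by (intros F H c; apply continuity_pt_of_continuous3_at; auto).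
  assert (cF : forall (F : R -> R -> R), (forall a b, continuous2_at F a b) ->
     continuity (fun s => F (x1 eps X1 X2 s) (x2 eps X1 X2 s))).
  { intros F hF s. apply continuity_pt_comp2; auto; apply continuity_pt_of_continuous3_at; auto. }
  set (k := fun r => (f1 (x1 eps X1 X2 r) (x2 eps X1 X2 r) * x1d eps X1 X2 r
                    + f2 (x1 eps X1 X2 r) (x2 eps X1 X2 r) * x2d eps X1 X2 r) * delta eps r).
  assert (ck : continuity k).
  { unfold k. apply continuity_mult; auto. apply continuity_plus; apply continuity_mult; auto. }
  exists (0 + f (x1 eps X1 X2 U) (x2 eps X1 X2 U) * delta eps U + RInt k (- eps) U).
  unfold v_eps. apply derivable_pt_lim_plus; [apply derivable_pt_lim_plus|].
  - apply derivable_pt_lim_const.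
  - apply (derivable_pt_lim_RInt (fun s => f (x1 eps X1 X2 s) (x2 eps X1 X2 s) * delta eps s)).
    apply continuity_mult; auto.
  - apply (derivable_pt_lim_RInt (fun s => RInt k (- eps) s)).
    intros s. eapply continuity_pt_derivable_pt_lim. apply derivable_pt_lim_RInt; auto.
Qed.

Lemma v_partial_V eps X1 X2 V U :
  derivable_pt_lim (fun s => v_eps f f1 f2 delta x1 x2 x1d x2d eps X1 X2 s U) V 1.
Proof.
  unfold v_eps. replace 1 with (1 + 0 + 0) by ring.
  apply (derivable_pt_lim_plus
           (fun s => s + RInt (fun s => f (x1 eps X1 X2 s) (x2 eps X1 X2 s) * delta eps s) (- eps) U)).
  - apply (derivable_pt_lim_plus (fun s => s)); [apply derivable_pt_lim_id|apply derivable_pt_lim_const].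
  - apply derivable_pt_lim_const.
Qed.

Lemma v_partials_X eps M X1 X2 V U : 0 < eps <= 1 -> Rabs X1 <= M -> Rabs X2 <= M ->
  (forall a b, Rabs a <= M + 1 -> Rabs b <= M + 1 -> flow_ode eps a b) ->
  exists l1 l2,
    derivable_pt_lim (fun s => v_eps f f1 f2 delta x1 x2 x1d x2d eps s X2 V U) X1 l1 /\
    derivable_pt_lim (fun s => v_eps f f1 f2 delta x1 x2 x1d x2d eps X1 s V U) X2 l2.
Proof.
  intros heps hX1 hX2 HQ.
  destruct (C2_partials_2d f f1 f2 (Hf 2%nat) Hf1 Hf2) as [F11 [F12 [F21 [F22 [jf [jf1 [jf2 _]]]]]]].
  destruct (C2_partials_3d (x1 eps) (x1d eps) (Hx1s eps heps 2%nat) (fun a b c => Hx1d eps a b c heps))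
    as [A1 [A2 [B1 [B2 [j0 [j1 [j2 [j3 [j4 [j5 [d1 [d2 [d3 d4]]]]]]]]]]]]].
  destruct (C2_partials_3d (x2 eps) (x2d eps) (Hx2s eps heps 2%nat) (fun a b c => Hx2d eps a b c heps))
    as [A1' [A2' [B1' [B2' [j0' [j1' [j2' [j3' [j4' [j5' [d1' [d2' [d3' d4']]]]]]]]]]]]].
  assert (hX1' : forall t, Rabs t < 1 -> Rabs (X1 + t) <= M + 1).
  { intros t ht. apply Rabs_le_inv in hX1. apply Rabs_def2 in ht. apply Rabs_le; lra. }
  assert (hX2' : forall t, Rabs t < 1 -> Rabs (X2 + t) <= M + 1).
  { intros t ht. apply Rabs_le_inv in hX2. apply Rabs_def2 in ht. apply Rabs_le; lra. }
  assert (hX1'' : Rabs X1 <= M + 1) by lra. assert (hX2'' : Rabs X2 <= M + 1) by lra.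
  destruct (derivable_v_param eps V U (fun t s => x1 eps (X1 + t) X2 s) (fun t s => x2 eps (X1 + t) X2 s)
     (fun t s => x1d eps (X1 + t) X2 s) (fun t s => x2d eps (X1 + t) X2 s)
     (fun t s => A1 (X1 + t) X2 s) (fun t s => A1' (X1 + t) X2 s)
     (fun t s => B1 (X1 + t) X2 s) (fun t s => B1' (X1 + t) X2 s)) as [l1 Hl1]; auto;
    try (intros; apply (derivable_pt_lim_at_shift (fun a => _ eps a X2 s)); auto).
  { intros t s. repeat split; apply continuous2_at_of_continuous3_at_fst; auto. }
  { intros t ht. destruct (HQ (X1 + t) X2 (hX1' t ht) hX2'') as [o1 [o2 _]].
    destruct (flow_before_support eps (X1 + t) X2 (- eps) heps (HQ _ _ (hX1' t ht) hX2'') ltac:(lra))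
      as [z1 [z2 _]].
    repeat split; auto. }
  destruct (derivable_v_param eps V U (fun t s => x1 eps X1 (X2 + t) s) (fun t s => x2 eps X1 (X2 + t) s)
     (fun t s => x1d eps X1 (X2 + t) s) (fun t s => x2d eps X1 (X2 + t) s)
     (fun t s => A2 X1 (X2 + t) s) (fun t s => A2' X1 (X2 + t) s)
     (fun t s => B2 X1 (X2 + t) s) (fun t s => B2' X1 (X2 + t) s)) as [l2 Hl2]; auto;
    try (intros; apply (derivable_pt_lim_at_shift (fun a => _ eps X1 a s)); auto).
  { intros t s. repeat split; apply continuous2_at_of_continuous3_at_snd; auto. }
  { intros t ht. destruct (HQ X1 (X2 + t) hX1'' (hX2' t ht)) as [o1 [o2 _]].
    destruct (flow_before_support eps X1 (X2 + t) (- eps) heps (HQ _ _ hX1'' (hX2' t ht)) ltac:(lra))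
      as [z1 [z2 _]].
    repeat split; auto. }
  exists l1, l2. split; apply derivable_pt_lim_of_shift; assumption.
Qed.

Lemma f_partials_bounds R0 : exists G L, 0 <= G /\ 0 <= L /\
  (forall p q, Rabs p <= R0 -> Rabs q <= R0 -> Rabs (f1 p q) <= G /\ Rabs (f2 p q) <= G) /\
  (forall p q p' q', Rabs p <= R0 -> Rabs q <= R0 -> Rabs p' <= R0 -> Rabs q' <= R0 ->
     Rabs (f1 p' q' - f1 p q) <= L * (Rabs (p' - p) + Rabs (q' - q)) /\
     Rabs (f2 p' q' - f2 p q) <= L * (Rabs (p' - p) + Rabs (q' - q))).
Proof.
  destruct (C2_partials_2d f f1 f2 (Hf 2%nat) Hf1 Hf2)
    as [F11 [F12 [F21 [F22 [_ [jf1 [jf2 [j11 [j12 [j21 [j22 [d11 [d12 [d21 d22]]]]]]]]]]]]]].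
  destruct (continuous2_bounded_on_square f1 R0 jf1) as [G1 [hG1 HG1]].
  destruct (continuous2_bounded_on_square f2 R0 jf2) as [G2 [hG2 HG2]].
  destruct (continuous2_bounded_on_square F11 R0 j11) as [L1 [hL1 HL1]].
  destruct (continuous2_bounded_on_square F12 R0 j12) as [L2 [hL2 HL2]].
  destruct (continuous2_bounded_on_square F21 R0 j21) as [L3 [hL3 HL3]].
  destruct (continuous2_bounded_on_square F22 R0 j22) as [L4 [hL4 HL4]].
  exists (Rmax G1 G2), (Rmax (Rmax L1 L2) (Rmax L3 L4)).
  generalize (Rmax_l G1 G2) (Rmax_r G1 G2) (Rmax_l L1 L2) (Rmax_r L1 L2) (Rmax_l L3 L4) (Rmax_r L3 L4)
    (Rmax_l (Rmax L1 L2) (Rmax L3 L4)) (Rmax_r (Rmax L1 L2) (Rmax L3 L4)).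
  intros m1 m2 m3 m4 m5 m6 m7 m8.
  repeat split; try lra.
  - specialize (HG1 p q H H0). lra.
  - specialize (HG2 p q H H0). lra.
  - apply (lipschitz_of_partials_bounded f1 F11 F12 R0); auto.
    intros a b ha hb. specialize (HL1 a b ha hb). specialize (HL2 a b ha hb). lra.
  - apply (lipschitz_of_partials_bounded f2 F21 F22 R0); auto.
    intros a b ha hb. specialize (HL3 a b ha hb). specialize (HL4 a b ha hb). lra.
Qed.

Lemma flow_jacobian_near_identity eps M G L Cd T rho X1 X2 U :
  0 < eps <= 1 -> Rabs X1 <= M -> Rabs X2 <= M -> 0 < rho <= 1 ->
  0 <= G -> 0 <= L -> 0 <= Cd -> delta_mass eps eps <= Cd -> 0 < T ->
  T * (G * Cd / 2) <= 1 / 4 -> 4 * (T * (L * Cd)) <= rho -> eps <= T / 2 -> U <= T / 2 ->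
  (forall p q, Rabs p <= M + 2 -> Rabs q <= M + 2 -> Rabs (f1 p q) <= G /\ Rabs (f2 p q) <= G) ->
  (forall p q p' q', Rabs p <= M + 2 -> Rabs q <= M + 2 -> Rabs p' <= M + 2 -> Rabs q' <= M + 2 ->
     Rabs (f1 p' q' - f1 p q) <= L * (Rabs (p' - p) + Rabs (q' - q)) /\
     Rabs (f2 p' q' - f2 p q) <= L * (Rabs (p' - p) + Rabs (q' - q))) ->
  (forall a b, Rabs a <= M + 1 -> Rabs b <= M + 1 -> flow_ode eps a b) ->
  exists a11 a12 a21 a22,
    derivable_pt_lim (fun s => x1 eps s X2 U) X1 a11 /\
    derivable_pt_lim (fun s => x1 eps X1 s U) X2 a12 /\
    derivable_pt_lim (fun s => x2 eps s X2 U) X1 a21 /\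
    derivable_pt_lim (fun s => x2 eps X1 s U) X2 a22 /\
    Rabs (a11 - 1) <= rho /\ Rabs (a12 - 0) <= rho /\
    Rabs (a21 - 0) <= rho /\ Rabs (a22 - 1) <= rho.
Proof.
  intros heps hX1 hX2 hrho hG hL hC0 hC hT hTW hTL heT hU HG HL HQ.
  destruct (C2_partials_3d (x1 eps) (x1d eps) (Hx1s eps heps 2%nat) (fun a b c => Hx1d eps a b c heps))
    as [A1 [A2 [_ [_ [_ [_ [_ [_ [_ [_ [e1 [e2 _]]]]]]]]]]]].
  destruct (C2_partials_3d (x2 eps) (x2d eps) (Hx2s eps heps 2%nat) (fun a b c => Hx2d eps a b c heps))
    as [A1' [A2' [_ [_ [_ [_ [_ [_ [_ [_ [e1' [e2' _]]]]]]]]]]]].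
  assert (Hs1 : (T / 2 + eps) * (G * Cd / 2) <= 1 / 4).
  { assert ((T / 2 + eps) * (G * Cd / 2) <= T * (G * Cd / 2)).
    { apply Rmult_le_compat_r; [apply Rmult_le_pos; [apply Rmult_le_pos|]|]; lra. }
    lra. }
  assert (Hs2 : 4 * ((T / 2 + eps) * (L * Cd)) <= rho).
  { assert ((T / 2 + eps) * (L * Cd) <= T * (L * Cd)).
    { apply Rmult_le_compat_r; [apply Rmult_le_pos|]; lra. }
    lra. }
  assert (hnear : forall c h, Rabs c <= M -> Rabs h < 1/2 -> Rabs (c + h) <= M + 1).
  { intros c h hc hh. apply Rabs_le_inv in hc. apply Rabs_def2 in hh. apply Rabs_le; lra. }
  assert (hXq : Rabs X1 <= M + 1 /\ Rabs X2 <= M + 1) by lra.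
  assert (hdiff := fun a' b' ha' hb' ha hb hm =>
    flow_difference_small eps X1 X2 a' b' Cd G L (T / 2) rho M heps
      (HQ _ _ (proj1 hXq) (proj2 hXq)) (HQ a' b' ha' hb') ltac:(lra) ltac:(lra) ha hb hm
      hG hL hC0 hC ltac:(lra) ltac:(lra) Hs1 Hs2 HG HL U hU).
  destruct (Rabs_derive_pair_sub_le (fun s => x1 eps s X2 U) (fun s => x2 eps s X2 U) X1
              (A1 X1 X2 U) (A1' X1 X2 U) 1 0 (1/2) rho) as [B11 B21]; auto; try lra.
  { intros h h0 hh.
    assert (E := hdiff (X1 + h) X2 (hnear X1 h hX1 hh) (proj2 hXq)).
    replace (X1 + h - X1) with h in E by ring. rewrite Rminus_diag, Rabs_R0, Rplus_0_r in E.
    specialize (E ltac:(lra) ltac:(lra) (Rabs_pos_lt h h0)).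
    replace (x1 eps (X1 + h) X2 U - x1 eps X1 X2 U - 1 * h)
      with (x1 eps (X1 + h) X2 U - x1 eps X1 X2 U - h) by ring.
    replace (x2 eps (X1 + h) X2 U - x2 eps X1 X2 U - 0 * h)
      with (x2 eps (X1 + h) X2 U - x2 eps X1 X2 U - 0) by ring.
    generalize (Rabs_pos h). nra. }
  destruct (Rabs_derive_pair_sub_le (fun s => x1 eps X1 s U) (fun s => x2 eps X1 s U) X2
              (A2 X1 X2 U) (A2' X1 X2 U) 0 1 (1/2) rho) as [B12 B22]; auto; try lra.
  { intros h h0 hh.
    assert (E := hdiff X1 (X2 + h) (proj1 hXq) (hnear X2 h hX2 hh)).
    replace (X2 + h - X2) with h in E by ring. rewrite Rminus_diag, Rabs_R0, Rplus_0_l in E.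
    specialize (E ltac:(lra) ltac:(lra) (Rabs_pos_lt h h0)).
    replace (x1 eps X1 (X2 + h) U - x1 eps X1 X2 U - 0 * h)
      with (x1 eps X1 (X2 + h) U - x1 eps X1 X2 U - 0) by ring.
    replace (x2 eps X1 (X2 + h) U - x2 eps X1 X2 U - 1 * h)
      with (x2 eps X1 (X2 + h) U - x2 eps X1 X2 U - h) by ring.
    generalize (Rabs_pos h). nra. }
  exists (A1 X1 X2 U), (A2 X1 X2 U), (A1' X1 X2 U), (A2' X1 X2 U). repeat split; auto.
Qed.

Definition block_jacobian (x1' x2' a11 a12 a21 a22 v0 v1 v2 : R) (i j : nat) : R :=
  match i, j with
  | O, O => 1 | O, _ => 0
  | 1%nat, O => x1' | 1%nat, 1%nat => a11 | 1%nat, 2%nat => a12 | 1%nat, _ => 0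
  | 2%nat, O => x2' | 2%nat, 1%nat => a21 | 2%nat, 2%nat => a22 | 2%nat, _ => 0
  | _, O => v0 | _, 1%nat => v1 | _, 2%nat => v2 | _, _ => 1
  end.

Lemma is_jacobian4_t_eps eps U X1 X2 V a11 a12 a21 a22 v0 v1 v2 : 0 < eps <= 1 ->
  derivable_pt_lim (fun s => x1 eps s X2 U) X1 a11 ->
  derivable_pt_lim (fun s => x1 eps X1 s U) X2 a12 ->
  derivable_pt_lim (fun s => x2 eps s X2 U) X1 a21 ->
  derivable_pt_lim (fun s => x2 eps X1 s U) X2 a22 ->
  derivable_pt_lim (fun u => v_eps f f1 f2 delta x1 x2 x1d x2d eps X1 X2 V u) U v0 ->
  derivable_pt_lim (fun s => v_eps f f1 f2 delta x1 x2 x1d x2d eps s X2 V U) X1 v1 ->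
  derivable_pt_lim (fun s => v_eps f f1 f2 delta x1 x2 x1d x2d eps X1 s V U) X2 v2 ->
  derivable_pt_lim (fun s => v_eps f f1 f2 delta x1 x2 x1d x2d eps X1 X2 s U) V 1 ->
  is_jacobian4 (t_eps f f1 f2 delta x1 x2 x1d x2d eps) (mkpt4 U X1 X2 V)
    (block_jacobian (x1d eps X1 X2 U) (x2d eps X1 X2 U) a11 a12 a21 a22 v0 v1 v2).
Proof.
  intros heps d11 d12 d21 d22 r0 r1 r2 r3 i j hi hj.
  destruct i as [|[|[|[|i]]]]; [| | | |lia]; destruct j as [|[|[|[|j]]]]; try lia;
    unfold has_partial; cbv [upd mkpt4 t_eps Nat.eqb block_jacobian];
    auto; try apply derivable_pt_lim_const; try apply derivable_pt_lim_id.
Qed.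

Hypothesis Hode : forall K : R -> R -> Prop, compact2 K ->
  exists epsK, 0 < epsK /\ forall X1 X2 eps, K X1 X2 -> 0 < eps <= 1 -> eps <= epsK ->
    flow_ode eps X1 X2.

(** [G] and [L] bound the [f_i] and their Lipschitz constants near [K],
    [Cd] bounds the mass of [|delta eps|], and [eta = T / 2]. *)
Lemma principal_minors_near_1 K : compact2 K -> forall d, 0 < d ->
  exists eta eps0, 0 < eta /\ 0 < eps0 <= 1 /\
    forall eps U X1 X2 V, 0 < eps <= eps0 -> U <= eta -> K X1 X2 ->
      exists J, is_jacobian4 (t_eps f f1 f2 delta x1 x2 x1d x2d eps) (mkpt4 U X1 X2 V) J /\
        forall S, principal_index S -> 1 - d < principal_minor J S < 1 + d.
Proof.
  intros hK d hd.
  set (rho := Rmin (1/4) (d/4)).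
  assert (hrho : 0 < rho <= d / 4 /\ rho <= 1 / 4).
  { unfold rho; repeat split; [apply Rmin_pos; lra|apply Rmin_r|apply Rmin_l]. }
  destruct (compact2_bounded K hK) as [M [hM HK]].
  destruct (Hode _ (compact2_square (M + 1))) as [epsK [hepsK HQ]].
  destruct (f_partials_bounds (M + 2)) as [G [L [hG [hL [HG HL]]]]].
  destruct Hdelta as [_ [_ [_ [Cd [e0 [hCd [he0 HCd]]]]]]].
  assert (hW : 0 <= G * Cd / 2) by (apply Rmult_le_pos; [apply Rmult_le_pos|]; lra).
  assert (hLC : 0 <= L * Cd) by (apply Rmult_le_pos; lra).
  destruct (small_time_scale _ _ rho hW hLC ltac:(lra)) as [T [hT [hTW hTL]]].
  set (eps0 := Rmin (Rmin 1 epsK) (Rmin (e0 / 2) (T / 2))).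
  generalize (Rmin_l (Rmin 1 epsK) (Rmin (e0 / 2) (T / 2))) (Rmin_r (Rmin 1 epsK) (Rmin (e0 / 2) (T / 2)))
    (Rmin_l 1 epsK) (Rmin_r 1 epsK) (Rmin_l (e0 / 2) (T / 2)) (Rmin_r (e0 / 2) (T / 2)).
  fold eps0. intros m1 m2 m3 m4 m5 m6.
  exists (T / 2), eps0. split; [lra|]. split.
  { split; [|lra]. apply Rmin_pos; apply Rmin_pos; lra. }
  intros eps U X1 X2 V heps hU hKX.
  assert (heps1 : 0 < eps <= 1) by lra.
  assert (HQe : forall a b, Rabs a <= M + 1 -> Rabs b <= M + 1 -> flow_ode eps a b).
  { intros a b ha hb. apply HQ; auto; lra. }
  destruct (HK X1 X2 hKX) as [hX1 hX2].
  destruct (v_partial_U eps X1 X2 V U heps1) as [v0 r0].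
  destruct (v_partials_X eps M X1 X2 V U heps1 hX1 hX2 HQe) as [v1 [v2 [r1 r2]]].
  destruct (flow_jacobian_near_identity eps M G L Cd T rho X1 X2 U heps1 hX1 hX2)
    as [a11 [a12 [a21 [a22 [d11 [d12 [d21 [d22 [b11 [b12 [b21 b22]]]]]]]]]]];
    auto; try lra; [apply HCd; lra|].
  rewrite Rminus_0_r in b12, b21.
  set (J := block_jacobian (x1d eps X1 X2 U) (x2d eps X1 X2 U) a11 a12 a21 a22 v0 v1 v2).
  exists J. split; [apply is_jacobian4_t_eps; auto; apply v_partial_V|].
  intros S hS.
  assert (H := principal_minor_block_near_1 J rho ltac:(lra) eq_refl eq_refl eq_refl eq_refl
                 eq_refl eq_refl eq_refl b11 b22 b12 b21 S hS).
  lra.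
Qed.

End Flow.

Lemma jacobian4_property_mono (t : R -> nat -> pt -> R) (K : R -> R -> Prop)
  (P Q : R -> (nat -> nat -> R) -> Prop) :
  (forall eps J, P eps J -> Q eps J) ->
  (exists eta eps0, 0 < eta /\ 0 < eps0 <= 1 /\
     forall eps U X1 X2 V, 0 < eps <= eps0 -> U <= eta -> K X1 X2 ->
       exists J, is_jacobian4 (t eps) (mkpt4 U X1 X2 V) J /\ P eps J) ->
  exists eta eps0, 0 < eta /\ 0 < eps0 <= 1 /\
    forall eps U X1 X2 V, 0 < eps <= eps0 -> U <= eta -> K X1 X2 ->
      exists J, is_jacobian4 (t eps) (mkpt4 U X1 X2 V) J /\ Q eps J.
Proof.
  intros hPQ [eta [eps0 [he [he0 H]]]]. exists eta, eps0. split; [|split]; auto.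
  intros eps U X1 X2 V h1 h2 h3. destruct (H eps U X1 X2 V h1 h2 h3) as [J [HJ HP]]. eauto.
Qed.

Theorem proposition6p4
  (f f1 f2 : R -> R -> R) (delta : R -> R -> R)
  (x1 x2 x1d x2d : R -> R -> R -> R -> R)
  (Hf : smooth 2 (fun p => f (p O) (p 1%nat)))
  (Hf1 : forall a b, derivable_pt_lim (fun s => f s b) a (f1 a b))
  (Hf2 : forall a b, derivable_pt_lim (fun s => f a s) b (f2 a b))
  (Hdelta : strict_delta_net delta)
  (Hx1s : forall eps, 0 < eps <= 1 ->
            smooth 3 (fun p => x1 eps (p O) (p 1%nat) (p 2%nat)))
  (Hx2s : forall eps, 0 < eps <= 1 ->
            smooth 3 (fun p => x2 eps (p O) (p 1%nat) (p 2%nat)))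
  (Hx1d : forall eps X1 X2 U, 0 < eps <= 1 ->
            derivable_pt_lim (fun u => x1 eps X1 X2 u) U (x1d eps X1 X2 U))
  (Hx2d : forall eps X1 X2 U, 0 < eps <= 1 ->
            derivable_pt_lim (fun u => x2 eps X1 X2 u) U (x2d eps X1 X2 U))
  (Hode : forall K : R -> R -> Prop, compact2 K ->
     exists epsK, 0 < epsK /\
       forall X1 X2 eps, K X1 X2 -> 0 < eps <= 1 -> eps <= epsK ->
         (forall U, derivable_pt_lim (fun u => x1d eps X1 X2 u) U
            (1 / 2 * f1 (x1 eps X1 X2 U) (x2 eps X1 X2 U) * delta eps U)) /\
         (forall U, derivable_pt_lim (fun u => x2d eps X1 X2 u) U
            (1 / 2 * f2 (x1 eps X1 X2 U) (x2 eps X1 X2 U) * delta eps U)) /\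
         x1 eps X1 X2 (-1) = X1 /\ x2 eps X1 X2 (-1) = X2 /\
         x1d eps X1 X2 (-1) = 0 /\ x2d eps X1 X2 (-1) = 0) :
  let t := t_eps f f1 f2 delta x1 x2 x1d x2d in
  (* main claim: principal minors in (1 - d, 1 + d) *)
  (forall K : R -> R -> Prop, compact2 K -> forall d, 0 < d ->
     exists eta eps0, 0 < eta /\ 0 < eps0 <= 1 /\
       forall eps U X1 X2 V, 0 < eps <= eps0 -> U <= eta -> K X1 X2 ->
         exists J, is_jacobian4 (t eps) (mkpt4 U X1 X2 V) J /\
           forall S, principal_index S ->
             1 - d < principal_minor J S < 1 + d) /\
  (* in particular: principal minors positive *)
  (forall K : R -> R -> Prop, compact2 K ->
     exists eta eps0, 0 < eta /\ 0 < eps0 <= 1 /\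
       forall eps U X1 X2 V, 0 < eps <= eps0 -> U <= eta -> K X1 X2 ->
         exists J, is_jacobian4 (t eps) (mkpt4 U X1 X2 V) J /\
           forall S, principal_index S -> 0 < principal_minor J S) /\
  (* in particular: det o DT strictly non-zero *)
  (forall K : R -> R -> Prop, compact2 K ->
     exists eta C N eps0, 0 < eta /\ 0 < C /\ 0 < eps0 <= 1 /\
       forall eps U X1 X2 V, 0 < eps <= eps0 -> U <= eta -> K X1 X2 ->
         exists J, is_jacobian4 (t eps) (mkpt4 U X1 X2 V) J /\
           C * eps ^ N <= Rabs (principal_minor J [0; 1; 2; 3]%nat)).
Proof.
  intros t.
  pose proof (principal_minors_near_1 f f1 f2 delta x1 x2 x1d x2d Hdelta Hx1d Hx2d Hf Hf1 Hf2
                Hx1s Hx2s Hode) as near.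
  assert (full : principal_index [0; 1; 2; 3]%nat).
  { split; [congruence|]. split; repeat constructor; simpl; intuition lia. }
  split; [exact near|split].
  - intros K hK. apply (jacobian4_property_mono t K (fun _ J =>
      forall S, principal_index S -> 1 - 1 < principal_minor J S < 1 + 1)); [|apply near; auto; lra].
    intros eps J HJ S hS. specialize (HJ S hS). lra.
  - intros K hK.
    destruct (jacobian4_property_mono t K (fun _ J =>
      forall S, principal_index S -> 1 - 1 / 2 < principal_minor J S < 1 + 1 / 2)
      (fun eps J => 1 / 2 * eps ^ 0 <= Rabs (principal_minor J [0; 1; 2; 3]%nat)))
      as [eta [eps0 [he [he0 H]]]]; [|apply near; auto; lra|].
    + intros eps J HJ. specialize (HJ _ full). rewrite pow_O, Rmult_1_r, Rabs_pos_eq; lra.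
    + exists eta, (1 / 2), 0%nat, eps0. split; [|split; [lra|split]]; auto.
Qed.
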